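(* Let $\kappa$ be an infinite cardinal. (1) $\mathbf{T}_{<\kappa}\supseteq\mathbf{T}^{\mathbf{c}}_{<\kappa}\supseteq\mathbf{T}^{\mathbf{ab}}_{<\kappa}\supseteq\mathbf{T}^{\mathbf{ec}}_{<\kappa}$. (2) Every $T\in\mathbf{T}_{<\kappa}$ can be extended to a member of $\mathbf{T}^{\mathbf{c}}_{<\kappa}$ with the same vocabulary. (3) Suppose $\mu$ is a cardinal, $\tau_i\cap\tau_j=\tau$ for all $i<j<\mu$, $T_i\in\mathbf{T}_{<\kappa}$ with $\tau(T_i)=\tau_i$, $T\in\mathbf{T}^{\mathbf{ab}}_{<\kappa}$ with $\tau(T)=\tau$, and $T\subseteq T_i$ for all $i<\mu$. Then $\bigcup_{i<\mu}T_i$ is consistent. (4) If $\kappa>\aleph_0$ and $T\in\mathbf{T}_{<\kappa}$, then $T$ can be extended to a member of $\mathbf{T}^{\mathbf{ec}}_{<\kappa}$. (5) For $l\in\{\mathbf{c},\mathbf{ab},\mathbf{ec}\}$: if $f$ is an isomorphism of vocabularies from $\tau_1$ onto $\tau_2$ and $T\in\mathbf{T}^l_{<\kappa}$ has vocabulary $\tau_1$, then $f(T)\in\mathbf{T}^l_{<\kappa}$.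
   Context: All vocabularies are relational. $\mathcal{L}$ is first-order logic extended by the quantifier $Q^{\mathrm{cf}}_{\aleph_0}$: $M\models Q^{\mathrm{cf}}_{\aleph_0}xy\,\varphi(x,y,\bar a)$ iff $\{(b,c):M\models\varphi(b,c,\bar a)\}$ is a linear order of $\{c:M\models\exists x\varphi(x,c,\bar a)\}$ of cofinality $\aleph_0$; this logic is compact. $\mathcal{L}(\tau)$ is the set of $\mathcal{L}$-sentences of vocabulary $\tau$. A theory $T$ is a set of $\mathcal{L}$-sentences with a specified vocabulary $\tau(T)$; consistent means finitely satisfiable. An embedding of vocabularies is an injective arity-preserving map, an isomorphism if surjective; it induces a renaming $f$ of sentences (replace each symbol $R$ by $f(R)$), and $f(T)=\{f(\sigma):\sigma\in T\}$ with vocabulary $f(\tau(T))$. $\bar R\approx\bar S$ for tuples of distinct predicates means same length and $R_i\mapsto S_i$ injective and arity-preserving. $\psi(\bar R,\bar S)$ denotes a sentence all of whose predicates lie among the distinct tuples $\bar R,\bar S$. $\mathbf{T}_{<\kappa}$: consistent theories $T$ with $|\tau(T)|<\kappa$. $\mathbf{T}^{\mathbf{c}}_{<\kappa}$: those $T\in\mathbf{T}_{<\kappa}$ complete in $\mathcal{L}(\tau(T))$. $\mathbf{T}^{\mathbf{ab}}_{<\kappa}$: those $T_0\in\mathbf{T}^{\mathbf{c}}_{<\kappa}$ such that whenever $\tau(T_0)=\tau_1\cap\tau_2$ and $T_1,T_2\in\mathbf{T}_{<\kappa}$ with $\tau(T_l)=\tau_l$ and $T_0=T_1\cap T_2$,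 $T_1\cup T_2$ is consistent. $\mathbf{T}^{\mathbf{ec}}_{<\kappa}$: those $T\in\mathbf{T}^{\mathbf{c}}_{<\kappa}$ such that for every $\psi(\bar R,\bar S)$ with $\bar R\subseteq\tau(T)$ and $\bar S$ disjoint from $\tau(T)$, if $T\cup\{\psi(\bar R,\bar S)\}$ is consistent then $\psi(\bar R,\bar S')\in T$ for some $\bar S'\subseteq\tau(T)$ with $\bar S\approx\bar S'$. *)

From Stdlib Require Import List.
Import ListNotations.
Set Implicit Arguments.

Definition injective {A B : Type} (f : A -> B) : Prop :=
  forall x y, f x = f y -> x = y.

Section Logic.
Variable Sym : Type.

Inductive form : Type :=
| FAtom (R : Sym) (xs : list nat)
| FEq (x y : nat)
| FNeg (phi : form)
| FAnd (phi psi : form)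
| FEx (x : nat) (phi : form)
| FQcf (x y : nat) (phi : form).

Fixpoint fv (phi : form) (v : nat) : Prop :=
  match phi with
  | FAtom _ xs => In v xs
  | FEq x y => v = x \/ v = y
  | FNeg p => fv p v
  | FAnd p q => fv p v \/ fv q v
  | FEx x p => v <> x /\ fv p v
  | FQcf x y p => v <> x /\ v <> y /\ fv p v
  end.

Fixpoint occurs (phi : form) (s : Sym) : Prop :=
  match phi with
  | FAtom R _ => R = s
  | FEq _ _ => False
  | FNeg p => occurs p s
  | FAnd p q => occurs p s \/ occurs q s
  | FEx _ p => occurs p s
  | FQcf _ _ p => occurs p s
  end.

Fixpoint rename (f : Sym -> Sym) (phi : form) : form :=
  match phi with
  | FAtom R xs => FAtom (f R) xs
  | FEq x y => FEq x y
  | FNeg p => FNeg (rename f p)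
  | FAnd p q => FAnd (rename f p) (rename f q)
  | FEx x p => FEx x (rename f p)
  | FQcf x y p => FQcf x y (rename f p)
  end.

Variable ar : Sym -> nat.

Fixpoint wf (phi : form) : Prop :=
  match phi with
  | FAtom R xs => length xs = ar R
  | FEq _ _ => True
  | FNeg p => wf p
  | FAnd p q => wf p /\ wf q
  | FEx _ p => wf p
  | FQcf _ _ p => wf p
  end.

Definition sentence_of (tau : Sym -> Prop) (phi : form) : Prop :=
  wf phi /\ (forall v, ~ fv phi v) /\ (forall s, occurs phi s -> tau s).

Definition upd {M : Type} (rho : nat -> M) (x : nat) (a : M) : nat -> M :=
  fun v => if Nat.eqb v x then a else rho v.

Definition linear_order_of {M : Type} (D : M -> Prop) (Rl : M -> M -> Prop) : Prop :=
  (forall b c, Rl b c -> D b /\ D c) /\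
  (forall b, D b -> Rl b b) /\
  (forall b c, Rl b c -> Rl c b -> b = c) /\
  (forall b c d, Rl b c -> Rl c d -> Rl b d) /\
  (forall b c, D b -> D c -> Rl b c \/ Rl c b).

Definition cof_aleph0 {M : Type} (D : M -> Prop) (Rl : M -> M -> Prop) : Prop :=
  (exists s : nat -> M, (forall n, D (s n)) /\
     (forall d, D d -> exists n, Rl d (s n))) /\
  ~ (exists l : list M, (forall a, In a l -> D a) /\
       (forall d, D d -> exists a, In a l /\ Rl d a)).

(* a structure: carrier M with interpretation I of every symbol *)
Fixpoint sat {M : Type} (I : Sym -> list M -> Prop) (rho : nat -> M)
  (phi : form) : Prop :=
  match phi with
  | FAtom R xs => I R (map rho xs)
  | FEq x y => rho x = rho y
  | FNeg p => ~ sat I rho p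
  | FAnd p q => sat I rho p /\ sat I rho q
  | FEx x p => exists a : M, sat I (upd rho x a) p
  | FQcf x y p =>
      let Rl := fun b c => sat I (upd (upd rho x b) y c) p in
      let D := fun c => exists b, Rl b c in
      linear_order_of D Rl /\ cof_aleph0 D Rl
  end.

(* consistent = finitely satisfiable (in a nonempty structure) *)
Definition consistent (Sigma : form -> Prop) : Prop :=
  forall l : list form, (forall phi, In phi l -> Sigma phi) ->
  exists (M : Type) (m0 : M) (I : Sym -> list M -> Prop),
    forall phi, In phi l -> forall rho : nat -> M, sat I rho phi.

Record theory : Type := Theory { voc : Sym -> Prop ; sens : form -> Prop }.

Definition is_theory (T : theory) : Prop :=
  forall phi, sens T phi -> sentence_of (voc T) phi.

Variable K : Type.  (* a type whose cardinality is kappa *)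

Definition card_lt (tau : Sym -> Prop) : Prop :=
  (exists f : {s | tau s} -> K, injective f) /\
  ~ (exists g : K -> {s | tau s}, injective g).

Definition T_lt (T : theory) : Prop :=
  is_theory T /\ consistent (sens T) /\ card_lt (voc T).

Definition complete (T : theory) : Prop :=
  forall phi, sentence_of (voc T) phi -> sens T phi \/ sens T (FNeg phi).

Definition T_c (T : theory) : Prop := T_lt T /\ complete T.

Definition T_ab (T0 : theory) : Prop :=
  T_c T0 /\
  forall T1 T2 : theory,
    (forall s, voc T0 s <-> voc T1 s /\ voc T2 s) ->
    T_lt T1 -> T_lt T2 ->
    (forall phi, sens T0 phi <-> sens T1 phi /\ sens T2 phi) ->
    consistent (fun phi => sens T1 phi \/ sens T2 phi).

(* psi(R,S) with R in tau(T) and S a tuple of distinct predicates disjoint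
   from tau(T); psi(R,S') obtained by the renaming S_i |-> S'_i. *)
Definition T_ec (T : theory) : Prop :=
  T_c T /\
  forall (S : list Sym) (psi : form),
    NoDup S -> (forall s, In s S -> ~ voc T s) ->
    sentence_of (fun s => voc T s \/ In s S) psi ->
    consistent (fun phi => sens T phi \/ phi = psi) ->
    exists S' : list Sym,
      length S' = length S /\ NoDup S' /\
      (forall i d, i < length S -> ar (nth i S' d) = ar (nth i S d)) /\
      (forall s, In s S' -> voc T s) /\
      exists g : Sym -> Sym,
        (forall i d, i < length S -> g (nth i S d) = nth i S' d) /\
        (forall s, ~ In s S -> g s = s) /\
        sens T (rename g psi).

Inductive cls : Type := Cc | Cab | Cec.

Definition T_cls (l : cls) (T : theory) : Prop :=
  match l with Cc => T_c T | Cab => T_ab T | Cec => T_ec T end.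

Definition rename_theory (f : Sym -> Sym) (tau2 : Sym -> Prop) (T : theory) : theory :=
  Theory tau2 (fun psi => exists phi, sens T phi /\ psi = rename f phi).

End Logic.

(* Parts (1)-(3) rest on one observation: for a complete theory T, being
   in T^ab amounts, by compactness, to amalgamating any two sentences consistent with T
   whose common symbols lie in tau(T).  An existentially closed T does this by moving the
   new symbols of one sentence into tau(T); part (3) follows by induction on the number
   of theories involved, and part (2) is Lindenbaum's lemma.  Part (5) pulls finitely many
   symbols back along f, sending those outside the image to fresh symbols.  For part (4)
   the extension is built in omega rounds: in round n every sentence over the current
   vocabulary and placeholder symbols which is first expressible at that round, and is
   consistent with what was chosen so far, receives fresh witness symbols indexed by a
   code of the sentence.  All codes live in tau(T) + nat, which has size below kappa
   because kappa is uncountable; Hessenberg's theorem |A x A| = |A| for infinite A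
   provides both the coding and kappa disjoint supplies of fresh symbols. *)

From Stdlib Require Import List Arith Lia Classical ClassicalEpsilon FunctionalExtensionality
  PropExtensionality ProofIrrelevance Cantor.
From mathcomp Require classical_sets.
Import ListNotations.
Set Implicit Arguments.

Lemma exists_least (P : nat -> Prop) : (exists n, P n) -> exists n, P n /\ forall m, m < n -> ~ P m.
Proof.
  intros [n Pn]. induction n as [n IH] using (well_founded_induction lt_wf).
  destruct (classic (exists m, m < n /\ P m)) as [[m [Hm Pm]]|N].
  - exact (IH m Hm Pm).
  - exists n. split; [exact Pn|]. intros m Hm Pm. apply N. eauto.
Qed.

Lemma exists_NoDup_filter {A : Type} (P : A -> Prop) (l : list A) :
  exists2 l', NoDup l' & forall x, In x l' <-> In x l /\ P x.
Proof.
  exists (nodup (fun x y => excluded_middle_informative (x = y))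
            (filter (fun x => if excluded_middle_informative (P x) then true else false) l)).
  - apply NoDup_nodup.
  - intros x. rewrite nodup_In, filter_In.
    destruct excluded_middle_informative; intuition discriminate.
Qed.

Fixpoint idx {A : Type} (x : A) (l : list A) : nat :=
  match l with
  | [] => 0
  | y :: l => if excluded_middle_informative (x = y) then 0 else S (idx x l)
  end.

Lemma idx_lt {A : Type} (x : A) l : In x l -> idx x l < length l.
Proof.
  induction l as [|y l IH]; simpl; [tauto|].
  destruct excluded_middle_informative; [lia|]. intros [E|H]; [congruence|]. specialize (IH H). lia.
Qed.

Lemma nth_idx {A : Type} (x : A) l d : In x l -> nth (idx x l) l d = x.
Proof.
  induction l as [|y l IH]; simpl; [tauto|].
  destruct excluded_middle_informative; [congruence|]. intros [E|H]; [congruence|auto].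
Qed.

Lemma idx_nth {A : Type} (l : list A) i d : NoDup l -> i < length l -> idx (nth i l d) l = i.
Proof.
  revert i. induction l as [|y l IH]; simpl; intros i ND Hi; [lia|].
  inversion ND as [|? ? Ny ND']; subst.
  destruct i as [|i]; destruct excluded_middle_informative as [E|E]; try congruence.
  - exfalso. apply Ny. rewrite <- E. apply nth_In. lia.
  - rewrite IH; auto. lia.
Qed.

Lemma list_preimage {A B : Type} (P : A -> Prop) (F : A -> B) (l : list B) :
  (forall y, In y l -> exists2 x, P x & y = F x) ->
  exists l0, l = map F l0 /\ forall x, In x l0 -> P x.
Proof.
  induction l as [|y l IH]; intros Hl.
  - exists []. simpl. tauto.
  - destruct IH as [l0 [-> H0]]; [intros; apply Hl; simpl; auto|].
    destruct (Hl y (or_introl eq_refl)) as [x Px ->].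
    exists (x :: l0). split; [reflexivity|intros z [<-|Hz]; auto].
Qed.

(** * Zorn's lemma and cardinal arithmetic *)

Definition inj_on {A B : Type} (X : A -> Prop) (f : A -> B) : Prop :=
  forall x y, X x -> X y -> f x = f y -> x = y.

Definition embeds {A B : Type} (X : A -> Prop) (Y : B -> Prop) : Prop :=
  exists2 f : A -> B, (forall x, X x -> Y (f x)) & inj_on X f.

Definition fullset (X : Type) (_ : X) := True.

Definition chain {T : Type} (F : (T -> Prop) -> Prop) : Prop :=
  forall X Y, F X -> F Y -> (forall t, X t -> Y t) \/ (forall t, Y t -> X t).

Definition bigunion {T : Type} (F : (T -> Prop) -> Prop) (t : T) : Prop :=
  exists2 X, F X & X t.

Lemma zorn_subsets (T : Type) (P : (T -> Prop) -> Prop) :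
  (forall F, (forall X, F X -> P X) -> chain F -> P (bigunion F)) ->
  exists2 A, P A & forall B, P B -> (forall t, A t -> B t) -> forall t, B t -> A t.
Proof.
  intros Hchain.
  destruct (classical_sets.Zorn_bigcup Hchain) as [A [PA Amax]].
  exists A; [exact PA|]. intros B PB AB t Bt.
  apply NNPP; intros nAt. apply (Amax B); [split; [exact AB|]|exact PB].
  intros BA. exact (nAt (BA t Bt)).
Qed.

(* The empty chain is handled by maximizing over the sets [A0 ∪ X]. *)
Lemma zorn_subsets_above (T : Type) (P : (T -> Prop) -> Prop) (A0 : T -> Prop) :
  P A0 ->
  (forall F, (forall X, F X -> P X) -> chain F -> (exists X, F X) -> P (bigunion F)) ->
  exists2 A, P A /\ (forall t, A0 t -> A t) &
    forall B, P B -> (forall t, A t -> B t) -> forall t, B t -> A t.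
Proof.
  intros PA0 Hchain.
  set (U := fun X t => A0 t \/ X t).
  destruct (@zorn_subsets T (fun X => P (U X))) as [X PX Xmax].
  - intros F FP Fch.
    destruct (classic (exists X, F X)) as [FX|F0].
    + set (G := fun Y => exists2 X, F X & Y = U X).
      replace (U (bigunion F)) with (bigunion G).
      * apply Hchain.
        -- intros Y [X' FX' ->]. exact (FP X' FX').
        -- intros Y1 Y2 [X1 F1 ->] [X2 F2 ->].
           destruct (Fch X1 X2 F1 F2) as [H|H]; [left|right]; intros t [Ht|Ht]; unfold U; auto.
        -- destruct FX as [X' FX']. exists (U X'), X'; auto.
      * extensionality t. apply propositional_extensionality. unfold U, bigunion. split.
        -- intros [Y [X' FX' ->] [Ht|Ht]]; eauto.
        -- intros [Ht|[X' FX' Ht]].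
           ++ destruct FX as [X' FX']. exists (U X'); [exists X'; auto|left; exact Ht].
           ++ exists (U X'); [exists X'; auto|right; exact Ht].
    + replace (U (bigunion F)) with A0; [exact PA0|].
      extensionality t. apply propositional_extensionality. unfold U, bigunion. split; [tauto|].
      intros [Ht|[X' FX' _]]; [exact Ht|exfalso; eauto].
  - exists (U X); [split; [exact PX|unfold U; tauto]|].
    intros B PB XB t Bt. right.
    assert (UB : U B = B).
    { extensionality u. apply propositional_extensionality. unfold U. split; [|tauto].
      intros [Hu|Hu]; [apply XB; left|]; exact Hu. }
    apply (Xmax B); [rewrite UB; exact PB| |exact Bt].
    intros u Xu. apply XB. right. exact Xu.
Qed.

Lemma embeds_total (A B : Type) (a0 : A) (b0 : B) (X : A -> Prop) (Y : B -> Prop) :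
  embeds X Y \/ embeds Y X.
Proof.
  set (partial_inj := fun G : A * B -> Prop =>
    (forall p, G p -> X (fst p) /\ Y (snd p)) /\
    (forall a b b', G (a, b) -> G (a, b') -> b = b') /\
    (forall a a' b, G (a, b) -> G (a', b) -> a = a')).
  destruct (@zorn_subsets _ partial_inj) as [G [GXY [Gfun Ginj]] Gmax].
  - intros F FP Fch. split; [|split].
    + intros p [Z FZ Zp]. exact (proj1 (FP Z FZ) p Zp).
    + intros a b b' [Z1 F1 Z1p] [Z2 F2 Z2p].
      destruct (Fch Z1 Z2 F1 F2) as [H|H].
      * exact (proj1 (proj2 (FP Z2 F2)) a b b' (H _ Z1p) Z2p).
      * exact (proj1 (proj2 (FP Z1 F1)) a b b' Z1p (H _ Z2p)).
    + intros a a' b [Z1 F1 Z1p] [Z2 F2 Z2p].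
      destruct (Fch Z1 Z2 F1 F2) as [H|H].
      * exact (proj2 (proj2 (FP Z2 F2)) a a' b (H _ Z1p) Z2p).
      * exact (proj2 (proj2 (FP Z1 F1)) a a' b Z1p (H _ Z2p)).
  - destruct (classic (forall a, X a -> exists b, G (a, b))) as [HX|HX].
    { left. exists (fun a => epsilon (inhabits b0) (fun b => G (a, b))).
      - intros a Xa. exact (proj2 (GXY _ (epsilon_spec _ _ (HX a Xa)))).
      - intros a a' Xa Xa' E. apply (Ginj a a' (epsilon (inhabits b0) (fun b => G (a, b)))).
        + exact (epsilon_spec _ _ (HX a Xa)).
        + rewrite E. exact (epsilon_spec _ _ (HX a' Xa')). }
    destruct (classic (forall b, Y b -> exists a, G (a, b))) as [HY|HY].
    { right. exists (fun b => epsilon (inhabits a0) (fun a => G (a, b))).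
      - intros b Yb. exact (proj1 (GXY _ (epsilon_spec _ _ (HY b Yb)))).
      - intros b b' Yb Yb' E. apply (Gfun (epsilon (inhabits a0) (fun a => G (a, b)))).
        + exact (epsilon_spec _ _ (HY b Yb)).
        + rewrite E. exact (epsilon_spec _ _ (HY b' Yb')). }
    exfalso.
    apply not_all_ex_not in HX as [a Ha]. apply imply_to_and in Ha as [Xa Ha].
    apply not_all_ex_not in HY as [b Hb]. apply imply_to_and in Hb as [Yb Hb].
    apply Ha. exists b. apply (Gmax (fun p => G p \/ p = (a, b))); [| |right; reflexivity].
    + split; [|split].
      * intros p [Gp| ->]; [exact (GXY p Gp)|auto].
      * intros a1 b1 b2 [H1|H1] [H2|H2]; try congruence; [exact (Gfun _ _ _ H1 H2)| |];
          injection H1 || injection H2; intros; subst; exfalso; eauto.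
      * intros a1 a2 b1 [H1|H1] [H2|H2]; try congruence; [exact (Ginj _ _ _ H1 H2)| |];
          injection H1 || injection H2; intros; subst; exfalso; eauto.
    + intros p Gp. left. exact Gp.
Qed.

Lemma to_nat_inj : injective to_nat.
Proof. intros p q E. rewrite <- (cancel_of_to p), <- (cancel_of_to q), E. reflexivity. Qed.

Section Hessenberg.
Variable A : Type.
Variable h : nat -> A.
Hypothesis h_inj : injective h.

Section Extension.
Variables (D : A -> Prop) (g : A -> A -> A) (i : A -> A).
Hypothesis g_closed : forall x y, D x -> D y -> D (g x y).
Hypothesis g_inj :
  forall x y x' y', D x -> D y -> D x' -> D y' -> g x y = g x' y' -> x = x' /\ y = y'.
Hypothesis i_out : forall x, D x -> ~ D (i x).
Hypothesis i_inj : inj_on D i.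
Hypothesis h_in : forall n, D (h n).

Definition ext_dom u := D u \/ exists2 x, D x & u = i x.

Let tag u := if excluded_middle_informative (D u) then 0 else 1.
Let code u := if excluded_middle_informative (D u) then u
              else epsilon (inhabits (h 0)) (fun x => D x /\ u = i x).

Let code_spec u : ext_dom u ->
  D (code u) /\ (tag u = 0 -> code u = u) /\ (tag u = 1 -> u = i (code u)).
Proof.
  unfold tag, code. destruct (excluded_middle_informative (D u)) as [Du|nDu].
  - intros _. repeat split; [exact Du|discriminate].
  - intros [Du|Hu]; [contradiction|].
    destruct (epsilon_spec (inhabits (h 0)) (fun x => D x /\ u = i x)) as [Dx Ex].
    { destruct Hu as [x Dx Ex]. exists x. auto. }
    repeat split; [exact Dx|discriminate|intros _; exact Ex].
Qed.

Let code_inj u u' : ext_dom u -> ext_dom u' -> tag u = tag u' -> code u = code u' -> u = u'.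
Proof.
  intros Hu Hu' T C.
  destruct (code_spec Hu) as [_ [C0 C1]]. destruct (code_spec Hu') as [_ [C0' C1']].
  assert (tag u = 0 \/ tag u = 1) as [T0|T1]
    by (unfold tag; destruct excluded_middle_informative; auto).
  - rewrite <- (C0 T0), <- (C0' (eq_trans (eq_sym T) T0)). exact C.
  - rewrite (C1 T1), (C1' (eq_trans (eq_sym T) T1)), C. reflexivity.
Qed.

(* Pairs outside [D × D] are sent into [i(D)], tagged by which of their coordinates lie in [D]. *)
Definition ext_pair u v :=
  if excluded_middle_informative (D u /\ D v) then g u v
  else i (g (g (code u) (code v)) (h (tag u + 2 * tag v))).

Lemma ext_pair_dom u v : ext_dom u -> ext_dom v ->
  ext_dom (ext_pair u v) /\ (D (ext_pair u v) <-> D u /\ D v).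
Proof.
  intros Hu Hv. unfold ext_pair. destruct (excluded_middle_informative (D u /\ D v)) as [[Du Dv]|N].
  - assert (Dg : D (g u v)) by auto. split; [left; exact Dg|tauto].
  - destruct (code_spec Hu) as [Du' _]. destruct (code_spec Hv) as [Dv' _].
    assert (Dg : D (g (g (code u) (code v)) (h (tag u + 2 * tag v)))) by auto.
    split; [right; eexists; [exact Dg|reflexivity]|].
    split; [intros Di; exfalso; exact (i_out Dg Di)|tauto].
Qed.

Lemma ext_pair_inj u v u' v' : ext_dom u -> ext_dom v -> ext_dom u' -> ext_dom v' ->
  ext_pair u v = ext_pair u' v' -> u = u' /\ v = v'.
Proof.
  intros Hu Hv Hu' Hv' E.
  assert (ED : D u /\ D v <-> D u' /\ D v').
  { rewrite <- (proj2 (ext_pair_dom Hu Hv)), <- (proj2 (ext_pair_dom Hu' Hv')), E. tauto. }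
  unfold ext_pair in E.
  destruct (excluded_middle_informative (D u /\ D v)) as [[Du Dv]|N];
  destruct (excluded_middle_informative (D u' /\ D v')) as [[Du' Dv']|N']; try tauto.
  - exact (g_inj Du Dv Du' Dv' E).
  - destruct (code_spec Hu) as [Cu _]. destruct (code_spec Hv) as [Cv _].
    destruct (code_spec Hu') as [Cu' _]. destruct (code_spec Hv') as [Cv' _].
    apply i_inj in E; auto.
    apply g_inj in E as [E1 E2]; auto.
    apply g_inj in E1 as [E3 E4]; auto. apply h_inj in E2.
    assert (Tu : tag u = tag u' /\ tag v = tag v').
    { unfold tag in *. repeat destruct excluded_middle_informative; lia. }
    split; apply code_inj; tauto.
Qed.

End Extension.

Definition pairing_dom (G : A * A * A -> Prop) x := exists y z, G (x, y, z).

Record pairing (G : A * A * A -> Prop) : Prop := {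
  pairing_functional : forall x y z z', G (x, y, z) -> G (x, y, z') -> z = z';
  pairing_injective : forall x y x' y' z, G (x, y, z) -> G (x', y', z) -> x = x' /\ y = y';
  pairing_closed : forall x y z, G (x, y, z) -> pairing_dom G y /\ pairing_dom G z;
  pairing_total : forall x y, pairing_dom G x -> pairing_dom G y -> exists z, G (x, y, z) }.

Definition nat_pairing (t : A * A * A) := exists m n, t = (h m, h n, h (to_nat (m, n))).

Lemma pairing_nat : pairing nat_pairing.
Proof.
  split.
  - intros x y z z' [m [n E]] [m' [n' E']]. injection E as -> -> ->. injection E' as E1 E2 ->.
    apply h_inj in E1, E2. subst. reflexivity.
  - intros x y x' y' z [m [n E]] [m' [n' E']]. injection E as -> -> ->. injection E' as -> -> E3.
    apply h_inj, (to_nat_inj (m, n) (m', n')) in E3. injection E3 as -> ->. auto.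
  - intros x y z [m [n E]]. injection E as -> -> ->.
    split; [exists (h 0), (h (to_nat (n, 0)))|exists (h 0), (h (to_nat (to_nat (m, n), 0)))];
      do 2 eexists; reflexivity.
  - intros x y [y1 [z1 [m [n1 E1]]]] [y2 [z2 [n [m2 E2]]]].
    injection E1 as -> _ _. injection E2 as -> _ _. eexists. exists m, n. reflexivity.
Qed.

Lemma pairing_chain F : (forall G, F G -> pairing G) -> chain F -> pairing (bigunion F).
Proof.
  intros FP Fch.
  assert (two : forall X Y t t', F X -> F Y -> X t -> Y t' -> exists2 Z, F Z & Z t /\ Z t').
  { intros X Y t t' FX FY Xt Yt'. destruct (Fch X Y FX FY) as [H|H]; eauto. }
  assert (dom_up : forall G x, F G -> pairing_dom G x -> pairing_dom (bigunion F) x).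
  { intros G x FG [y [z Gt]]. exists y, z, G; auto. }
  split.
  - intros x y z z' [X FX Xt] [Y FY Yt].
    destruct (two X Y _ _ FX FY Xt Yt) as [Z FZ [Z1 Z2]].
    exact (pairing_functional (FP Z FZ) _ _ _ _ Z1 Z2).
  - intros x y x' y' z [X FX Xt] [Y FY Yt].
    destruct (two X Y _ _ FX FY Xt Yt) as [Z FZ [Z1 Z2]].
    exact (pairing_injective (FP Z FZ) _ _ _ _ _ Z1 Z2).
  - intros x y z [X FX Xt].
    destruct (pairing_closed (FP X FX) _ _ _ Xt). split; eapply dom_up; eauto.
  - intros x y [y1 [z1 [X FX X1]]] [y2 [z2 [Y FY Y2]]].
    destruct (two X Y _ _ FX FY X1 Y2) as [Z FZ [Z1 Z2]].
    destruct (@pairing_total _ (FP Z FZ) x y) as [z Zz]; [exists y1, z1; auto|exists y2, z2; auto|].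
    exists z, Z; auto.
Qed.

Lemma pairing_function G : pairing G ->
  exists g : A -> A -> A,
    (forall x y, pairing_dom G x -> pairing_dom G y -> G (x, y, g x y)) /\
    (forall x y, pairing_dom G x -> pairing_dom G y -> pairing_dom G (g x y)) /\
    (forall x y x' y', pairing_dom G x -> pairing_dom G y -> pairing_dom G x' -> pairing_dom G y' ->
       g x y = g x' y' -> x = x' /\ y = y').
Proof.
  intros PG. set (g := fun x y => epsilon (inhabits (h 0)) (fun z => G (x, y, z))).
  assert (Gg : forall x y, pairing_dom G x -> pairing_dom G y -> G (x, y, g x y)).
  { intros x y Dx Dy. apply epsilon_spec. exact (pairing_total PG Dx Dy). }
  exists g. split; [exact Gg|split].
  - intros x y Dx Dy. exact (proj2 (pairing_closed PG _ _ _ (Gg x y Dx Dy))).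
  - intros x y x' y' Dx Dy Dx' Dy' E. apply (pairing_injective PG _ _ _ _ _ (Gg x y Dx Dy)).
    rewrite E. exact (Gg x' y' Dx' Dy').
Qed.

Definition graph_on (D : A -> Prop) (F : A -> A -> A) (t : A * A * A) : Prop :=
  let '(u, v, w) := t in D u /\ D v /\ w = F u v.

Lemma pairing_graph_on D F : (forall x y, D x -> D y -> D (F x y)) ->
  (forall x y x' y', D x -> D y -> D x' -> D y' -> F x y = F x' y' -> x = x' /\ y = y') ->
  pairing (graph_on D F) /\ forall u, D u -> pairing_dom (graph_on D F) u.
Proof.
  intros F_closed F_inj.
  assert (dom : forall u, D u -> pairing_dom (graph_on D F) u).
  { intros u Du. exists u, (F u u). simpl. auto. }
  split; [split|exact dom].
  - intros x y z z' (_ & _ & ->) (_ & _ & ->). reflexivity.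
  - intros x y x' y' z (Dx & Dy & ->) (Dx' & Dy' & E). exact (F_inj _ _ _ _ Dx Dy Dx' Dy' E).
  - intros x y z (Dx & Dy & ->). split; [auto|apply dom, F_closed; assumption].
  - intros x y [y1 [z1 (Dx & _)]] [y2 [z2 (Dy & _)]]. exists (F x y). simpl. auto.
Qed.

(* The domain [D] of a maximal partial pairing cannot embed
   into its complement by some [i] (the pairing would extend to [D ∪ i(D)]), so the
   complement embeds into [D] and [A] embeds into [D × D]. *)
Theorem square_embeds : exists p : A * A -> A, injective p.
Proof.
  destruct (@zorn_subsets_above _ pairing nat_pairing pairing_nat) as [G [PG base] Gmax].
  { intros F FP Fch _. exact (pairing_chain FP Fch). }
  destruct (pairing_function PG) as (g & Gg & g_closed & g_inj).
  set (D := pairing_dom G) in *.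
  assert (Dh : forall n, D (h n)).
  { intro n. exists (h 0), (h (to_nat (n, 0))). apply base. exists n, 0. reflexivity. }
  destruct (embeds_total (h 0) (h 0) D (fun a => ~ D a)) as [[i i_out i_inj]|[j j_in j_inj]].
  - exfalso.
    set (G' := graph_on (ext_dom D i) (ext_pair D g i)).
    destruct (pairing_graph_on (ext_dom D i) (ext_pair D g i)) as [PG' dom'].
    { intros x y Dx Dy. exact (proj1 (ext_pair_dom g g_closed i_out Dh Dx Dy)). }
    { exact (ext_pair_inj g g_closed g_inj i_out i_inj Dh). }
    assert (GG' : forall t, G t -> G' t).
    { intros [[x y] z] Gt. assert (Dx : D x) by (exists y, z; exact Gt).
      destruct (pairing_closed PG _ _ _ Gt) as [Dy Dz].
      simpl. split; [left; exact Dx|split; [left; exact Dy|]].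
      unfold ext_pair. destruct excluded_middle_informative as [_|N]; [|tauto].
      exact (pairing_functional PG _ _ _ _ Gt (Gg x y Dx Dy)). }
    apply (i_out (h 0) (Dh 0)).
    destruct (dom' (i (h 0))) as [y [z Gt]]; [right; exists (h 0); auto|].
    exists y, z. exact (Gmax G' PG' GG' _ Gt).
  - set (e := fun a => if excluded_middle_informative (D a) then g a (h 0) else g (j a) (h 1)).
    assert (e_in : forall a, D (e a)).
    { intro a. unfold e. destruct excluded_middle_informative; auto. }
    assert (e_inj : injective e).
    { intros a b E. unfold e in E.
      destruct (excluded_middle_informative (D a)) as [Da|Na];
      destruct (excluded_middle_informative (D b)) as [Db|Nb];
      apply g_inj in E as [E1 E2]; auto; apply h_inj in E2; discriminate. }
    exists (fun p => g (e (fst p)) (e (snd p))).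
    intros [a b] [a' b'] E. apply g_inj in E as [E1 E2]; auto.
    simpl in *. apply e_inj in E1, E2. subst. reflexivity.
Qed.

End Hessenberg.

Lemma shift_avoids (X : Type) (u : nat -> X) : injective u ->
  exists2 s : X -> X, injective s & forall x, s x <> u 0.
Proof.
  intros u_inj.
  set (s := fun x => match excluded_middle_informative (exists n, u n = x) with
                     | left H => u (S (proj1_sig (constructive_indefinite_description _ H)))
                     | right _ => x end).
  assert (s_u : forall n, s (u n) = u (S n)).
  { intro n. unfold s. destruct excluded_middle_informative as [H|H]; [|exfalso; eauto].
    destruct constructive_indefinite_description as [m Hm]. simpl. apply u_inj in Hm. subst.
    reflexivity. }
  assert (s_out : forall x, ~ (exists n, u n = x) -> s x = x).
  { intros x Hx. unfold s. destruct excluded_middle_informative; tauto. }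
  exists s.
  - intros x y E.
    destruct (classic (exists n, u n = x)) as [[m <-]|Hx];
    destruct (classic (exists n, u n = y)) as [[n <-]|Hy].
    + rewrite !s_u in E. apply u_inj in E. congruence.
    + rewrite s_u, (s_out _ Hy) in E. exfalso. eauto.
    + rewrite s_u, (s_out _ Hx) in E. exfalso. eauto.
    + rewrite (s_out _ Hx), (s_out _ Hy) in E. exact E.
  - intros x E. destruct (classic (exists n, u n = x)) as [[m <-]|Hx].
    + rewrite s_u in E. apply u_inj in E. discriminate.
    + rewrite (s_out _ Hx) in E. subst. eauto.
Qed.

Lemma avoid_point (X : Type) (h : nat -> X) (x0 : X) : injective h ->
  exists2 s : X -> X, injective s & forall x, s x <> x0.
Proof.
  intros h_inj. destruct (classic (exists j, h j = x0)) as [[j <-]|N].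
  - apply (shift_avoids (u := fun n => h (n + j))). intros m n E. apply h_inj in E. lia.
  - apply (shift_avoids (u := fun n => match n with 0 => x0 | S n => h n end)).
    intros [|m] [|n] E; [reflexivity|exfalso; eauto|exfalso; eauto|]. f_equal. exact (h_inj m n E).
Qed.

Lemma sum_nat_embeds_square (X : Type) (u : nat -> X) : injective u ->
  exists e : X + nat -> X * X, injective e.
Proof.
  intros u_inj.
  exists (fun a => match a with inl x => (x, u 0) | inr n => (u n, u 1) end).
  intros [x|m] [y|n] E; pose proof (f_equal fst E) as E1; pose proof (f_equal snd E) as E2;
    simpl in E1, E2; try apply u_inj in E1; apply u_inj in E2; congruence.
Qed.

Lemma sum_nat_embeds (K X : Type) (h : nat -> K) (pK : K * K -> K) (f : X -> K) :
  injective h -> injective pK -> injective f -> exists e : X + nat -> K, injective e.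
Proof.
  intros h_inj pK_inj f_inj.
  exists (fun a => match a with inl x => pK (f x, h 0) | inr n => pK (h n, h 1) end).
  intros [x|m] [y|n] E; apply pK_inj in E;
    pose proof (f_equal fst E) as E1; pose proof (f_equal snd E) as E2; simpl in E1, E2;
    apply h_inj in E2; try discriminate; f_equal; [apply f_inj, E1|apply h_inj, E1].
Qed.

Lemma no_embedding_sum_nat (K X : Type) :
  ~ (exists g : K -> X, injective g) -> ~ (exists g : K -> nat, injective g) ->
  ~ (exists g : K -> X + nat, injective g).
Proof.
  intros NX Nnat [g g_inj].
  assert (nat_code : (exists c : X -> nat, injective c) -> False).
  { intros [c c_inj]. apply Nnat.
    exists (fun k => match g k with inl x => 2 * c x | inr n => S (2 * n) end).
    intros a b E. apply g_inj.
    destruct (g a) as [x|m]; destruct (g b) as [y|n]; try lia; f_equal; [apply c_inj|]; lia. }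
  destruct (classic (inhabited X)) as [[x0]|NoX].
  - destruct (embeds_total 0 x0 (fun _ : nat => True) (fun _ : X => True))
      as [[u _ u_inj]|[c _ c_inj]].
    + assert (u_inj' : injective u) by (intros m n; apply u_inj; auto).
      destruct (sum_nat_embeds_square u_inj') as [e e_inj].
      destruct (square_embeds u_inj') as [p p_inj].
      apply NX. exists (fun k => p (e (g k))). intros a b E. auto.
    + apply nat_code. exists c. intros x y. apply c_inj; auto.
  - apply nat_code. exists (fun x => match NoX (inhabits x) with end). intros x.
    contradiction (NoX (inhabits x)).
Qed.

Section BelowKappa.
Variables Sym K : Type.
Variable h : nat -> K.
Hypothesis h_inj : injective h.

Lemma card_ltP (P : Sym -> Prop) :
  card_lt K P <-> embeds P (@fullset K) /\ ~ embeds (@fullset K) P.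
Proof.
  split.
  - intros [[f f_inj] N]. split.
    + exists (fun s => match excluded_middle_informative (P s) with
                       | left H => f (exist _ s H) | right _ => h 0 end); [constructor|].
      intros x y Px Py E.
      destruct (excluded_middle_informative (P x)) as [Hx|]; [|contradiction].
      destruct (excluded_middle_informative (P y)) as [Hy|]; [|contradiction].
      apply f_inj in E. injection E as E. exact E.
    + intros [g gP g_inj]. apply N.
      exists (fun k => exist _ (g k) (gP k I)).
      intros a b E. injection E as E. exact (g_inj a b I I E).
  - intros [[f _ f_inj] N]. split.
    + exists (fun u => f (proj1_sig u)). intros [x Hx] [y Hy] E. simpl in E.
      pose proof (f_inj x y Hx Hy E). subst. f_equal. apply proof_irrelevance.
    + intros [g g_inj]. apply N. exists (fun k => proj1_sig (g k)).
      * intros k _. exact (proj2_sig (g k)).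
      * intros a b _ _ E. apply g_inj. destruct (g a), (g b). simpl in E. subst.
        f_equal. apply proof_irrelevance.
Qed.

Lemma card_lt_sub (P Q : Sym -> Prop) : (forall s, Q s -> P s) -> card_lt K P -> card_lt K Q.
Proof.
  intros QP. rewrite !card_ltP. intros [[f _ f_inj] N]. split.
  - exists f; [constructor|]. intros x y Qx Qy. apply f_inj; auto.
  - intros [g gQ g_inj]. apply N. exists g; auto.
Qed.

Lemma card_lt_add1 (P : Sym -> Prop) x : card_lt K P -> card_lt K (fun s => P s \/ s = x).
Proof.
  rewrite !card_ltP. intros [[f _ f_inj] N].
  destruct (avoid_point (h 0) h_inj) as [s s_inj s_out].
  split.
  - exists (fun t => if excluded_middle_informative (t = x) then h 0 else s (f t)); [constructor|].
    intros a b Ha Hb E.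
    destruct (excluded_middle_informative (a = x)) as [->|Ea];
    destruct (excluded_middle_informative (b = x)) as [->|Eb];
      [reflexivity|exfalso; exact (s_out _ (eq_sym E))|exfalso; exact (s_out _ E)|].
    apply s_inj, f_inj in E; [exact E|tauto|tauto].
  - intros [g gP g_inj]. apply N.
    destruct (classic (exists k0, g k0 = x)) as [[k0 Hk0]|Nx].
    + destruct (avoid_point k0 h_inj) as [t t_inj t_out].
      exists (fun k => g (t k)).
      * intros k _. destruct (gP (t k) I) as [H|H]; [exact H|].
        exfalso. apply (t_out k). apply g_inj; [constructor|constructor|congruence].
      * intros a b _ _ E. apply g_inj in E; [exact (t_inj a b E)|constructor|constructor].
    + exists g; [|exact g_inj]. intros k _. destruct (gP k I) as [H|H]; [exact H|].
      exfalso. eauto.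
Qed.

Lemma card_lt_app (P : Sym -> Prop) l : card_lt K P -> card_lt K (fun s => P s \/ In s l).
Proof.
  intros HP. induction l as [|x l IH].
  - apply (card_lt_sub (P := P)); [simpl; tauto|exact HP].
  - apply (card_lt_sub (P := fun s => (P s \/ In s l) \/ s = x)).
    + intros s [Hs|[<-|Hs]]; auto.
    + apply card_lt_add1. exact IH.
Qed.

End BelowKappa.

Section FreshSymbols.
Variables (Sym : Type) (ar : Sym -> nat) (K : Type).
Variable h : nat -> K.
Hypothesis h_inj : injective h.
Hypothesis Hbig : forall n, exists h : K -> {s : Sym | ar s = n}, injective h.

Lemma arity_class_embeds n : embeds (@fullset K) (fun s => ar s = n).
Proof.
  destruct (Hbig n) as [H H_inj].
  exists (fun k => proj1_sig (H k)); [intros k _; exact (proj2_sig (H k))|].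
  intros a b _ _ E. apply H_inj. destruct (H a), (H b). simpl in E. subst.
  f_equal. apply proof_irrelevance.
Qed.

Lemma fresh_symbol (tau : Sym -> Prop) n (E : list Sym) : card_lt K tau ->
  exists x, ar x = n /\ ~ tau x /\ ~ In x E.
Proof.
  intros Htau. apply (card_lt_app h_inj E), (card_ltP h) in Htau as [_ N].
  apply NNPP. intro C. apply N.
  destruct (arity_class_embeds n) as [H Har H_inj]. exists H; [|exact H_inj].
  intros k _. apply NNPP. intro D. apply C. exists (H k). split; [exact (Har k I)|tauto].
Qed.

Lemma fresh_symbols (tau : Sym -> Prop) (S E : list Sym) : card_lt K tau ->
  exists Fr, NoDup Fr /\ length Fr = length S /\
    (forall i d d', i < length S -> ar (nth i Fr d) = ar (nth i S d')) /\
    (forall s, In s Fr -> ~ tau s /\ ~ In s E).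
Proof.
  intros Htau. induction S as [|a S IH].
  - exists []. simpl. repeat split; [constructor|intros; lia|tauto|tauto].
  - destruct IH as [Fr [ND [L [Ar Fresh]]]].
    destruct (fresh_symbol (ar a) (E ++ Fr) Htau) as [x [ax [tx Ex]]].
    exists (x :: Fr). split; [|split; [|split]].
    + constructor; [|exact ND]. intro I. apply Ex, in_or_app. auto.
    + simpl. congruence.
    + intros [|i] d d' Hi; simpl; [exact ax|]. apply Ar. simpl in Hi. lia.
    + intros y [<-|Hy]; [split; [exact tx|]|split; [exact (proj1 (Fresh y Hy))|]].
      * intro I. apply Ex, in_or_app. auto.
      * intro I. apply (proj2 (Fresh y Hy)). exact I.
Qed.

(* Splitting [K] into [K] rows via [K × K ≅ K], some row misses [E]: otherwise
   choosing a point of [E] in every row would embed [K] into [E]. *)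
Lemma fresh_family (pK : K * K -> K) (E : Sym -> Prop) a : injective pK ->
  ~ embeds (@fullset K) E ->
  exists2 r : K -> Sym, injective r & forall k, ar (r k) = a /\ ~ E (r k).
Proof.
  intros pK_inj N.
  destruct (arity_class_embeds a) as [H Har H_inj].
  destruct (classic (exists k0, forall k, ~ E (H (pK (k0, k))))) as [[k0 Hk0]|C].
  - exists (fun k => H (pK (k0, k))).
    + intros x y Exy. apply H_inj, pK_inj in Exy; [|constructor|constructor].
      injection Exy as E'. exact E'.
    + intro k. split; [exact (Har _ I)|apply Hk0].
  - exfalso. apply N.
    assert (row_hits : forall k0, exists k, E (H (pK (k0, k)))).
    { intro k0. apply NNPP. intro Nk. apply C. exists k0. intros k Ek. apply Nk. eauto. }
    set (c := fun k0 => epsilon (inhabits (h 0)) (fun k => E (H (pK (k0, k))))).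
    exists (fun k => H (pK (k, c k))).
    + intros k _. exact (epsilon_spec _ _ (row_hits k)).
    + intros x y _ _ Exy. apply H_inj, pK_inj in Exy; [|constructor|constructor].
      injection Exy as E' _. exact E'.
Qed.

Lemma fresh_indexed_family (X : Type) (pK : K * K -> K) (E : Sym -> Prop) (e : X -> K) :
  injective pK -> ~ embeds (@fullset K) E -> injective e ->
  exists fr : nat -> X -> Sym, (forall a c, ar (fr a c) = a) /\ (forall a c, ~ E (fr a c)) /\
    (forall a c b d, fr a c = fr b d -> a = b /\ c = d).
Proof.
  intros pK_inj N e_inj.
  destruct (arity_class_embeds 0) as [H0 _ _].
  set (row := fun a => epsilon (inhabits H0)
                (fun r => injective r /\ forall k, ar (r k) = a /\ ~ E (r k))).
  assert (row_spec : forall a, injective (row a) /\ forall k, ar (row a k) = a /\ ~ E (row a k)).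
  { intros a. apply epsilon_spec. destruct (fresh_family a pK_inj N) as [r r_inj Hr]. eauto. }
  exists (fun a c => row a (e c)). split; [|split].
  - intros a c. apply row_spec.
  - intros a c. apply row_spec.
  - intros a c b d Eq.
    assert (ab : a = b).
    { rewrite <- (proj1 (proj2 (row_spec a) (e c))), <- (proj1 (proj2 (row_spec b) (e d))), Eq.
      reflexivity. }
    subst b. split; [reflexivity|]. apply e_inj, (proj1 (row_spec a)), Eq.
Qed.

End FreshSymbols.

(** * Syntax, semantics and consistency *)

Section Syntax.
Variable Sym : Type.
Implicit Types (phi psi : form Sym) (g r : Sym -> Sym).

Lemma rename_ext g g' phi :
  (forall s, occurs phi s -> g s = g' s) -> rename g phi = rename g' phi.
Proof. induction phi; intros E; simpl in *; f_equal; auto. Qed.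

Lemma rename_comp g r phi : rename r (rename g phi) = rename (fun s => r (g s)) phi.
Proof. induction phi; simpl; f_equal; auto. Qed.

Lemma rename_id phi : rename (fun s => s) phi = phi.
Proof. induction phi; simpl; f_equal; auto. Qed.

Lemma occurs_rename g phi t : occurs (rename g phi) t <-> exists2 s, occurs phi s & g s = t.
Proof.
  induction phi; simpl; try tauto.
  - split; [intros <-; eauto|intros [s -> <-]; reflexivity].
  - split; [tauto|intros [s []]].
  - rewrite IHphi1, IHphi2. split.
    + intros [[s H1 H2]|[s H1 H2]]; eauto.
    + intros [s [H1|H1] H2]; eauto.
Qed.

Lemma fv_rename g phi v : fv (rename g phi) v <-> fv phi v.
Proof. induction phi; simpl; try rewrite IHphi; try rewrite IHphi1, IHphi2; tauto. Qed.

Lemma wf_rename (ar : Sym -> nat) g phi :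
  (forall s, occurs phi s -> ar (g s) = ar s) -> wf ar phi -> wf ar (rename g phi).
Proof.
  induction phi; simpl; intros Har W; auto.
  - rewrite Har; auto.
  - destruct W; split; auto.
Qed.

Lemma sentence_mono ar (tau tau' : Sym -> Prop) phi :
  (forall s, tau s -> tau' s) -> sentence_of ar tau phi -> sentence_of ar tau' phi.
Proof. intros T [W [C O]]. split; auto. Qed.

Lemma sentence_rename ar (tau' : Sym -> Prop) g phi :
  (forall s, occurs phi s -> ar (g s) = ar s /\ tau' (g s)) ->
  wf ar phi -> (forall v, ~ fv phi v) -> sentence_of ar tau' (rename g phi).
Proof.
  intros Hg W C. split; [|split].
  - apply wf_rename; [intros s Os; apply Hg|]; auto.
  - intros v Hv. apply fv_rename in Hv. exact (C v Hv).
  - intros t Ot. apply occurs_rename in Ot as [s Os <-]. apply Hg, Os.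
Qed.

Fixpoint syms phi : list Sym :=
  match phi with
  | FAtom R _ => [R]
  | FEq _ _ => []
  | FNeg p => syms p
  | FAnd p q => syms p ++ syms q
  | FEx _ p => syms p
  | FQcf _ _ p => syms p
  end.

Lemma syms_occurs phi s : In s (syms phi) <-> occurs phi s.
Proof. induction phi; simpl; try rewrite in_app_iff; tauto. Qed.

Definition top : form Sym := @FEx Sym 0 (@FEq Sym 0 0).

Fixpoint bigand (l : list (form Sym)) : form Sym :=
  match l with
  | [] => top
  | phi :: l => FAnd phi (bigand l)
  end.

Lemma occurs_bigand l s : occurs (bigand l) s <-> exists2 phi, In phi l & occurs phi s.
Proof.
  induction l as [|psi l IH]; simpl.
  - split; [tauto|intros [phi []]].
  - rewrite IH. split.
    + intros [H|[phi H1 H2]]; eauto.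
    + intros [phi [<-|H1] H2]; eauto.
Qed.

Lemma sentence_bigand ar tau l :
  (forall phi, In phi l -> sentence_of ar tau phi) -> sentence_of ar tau (bigand l).
Proof.
  induction l as [|psi l IH]; simpl; intros H.
  - split; [exact I|split]. + intros v [N [E|E]]; contradiction. + intros s [].
  - destruct (H psi (or_introl eq_refl)) as [W [C O]].
    destruct (IH (fun phi Hp => H phi (or_intror Hp))) as [W' [C' O']].
    split; [split; auto|split].
    + intros v [Hv|Hv]; [exact (C v Hv)|exact (C' v Hv)].
    + intros s [Hs|Hs]; auto.
Qed.

End Syntax.

Section Semantics.
Variable Sym : Type.
Implicit Types (phi psi : form Sym) (g r : Sym -> Sym).

Lemma sat_qcf_ext {M : Type} (R1 R2 : M -> M -> Prop) : (forall b c, R1 b c = R2 b c) ->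
  (linear_order_of (fun c => exists b, R1 b c) R1 /\ cof_aleph0 (fun c => exists b, R1 b c) R1) =
  (linear_order_of (fun c => exists b, R2 b c) R2 /\ cof_aleph0 (fun c => exists b, R2 b c) R2).
Proof.
  intros E. replace R2 with R1; [reflexivity|].
  extensionality b. extensionality c. apply E.
Qed.

Lemma sat_ext_interp {M : Type} (I J : Sym -> list M -> Prop) phi :
  (forall s, occurs phi s -> I s = J s) -> forall rho, sat I rho phi = sat J rho phi.
Proof.
  induction phi; intros HIJ rho; simpl in *.
  - rewrite HIJ; auto.
  - reflexivity.
  - rewrite IHphi; auto.
  - rewrite IHphi1, IHphi2; auto.
  - f_equal. extensionality a. apply IHphi; auto.
  - apply sat_qcf_ext. intros b c. apply IHphi. exact HIJ.
Qed.

Lemma sat_ext_env {M : Type} (I : Sym -> list M -> Prop) phi :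
  forall rho rho', (forall v, fv phi v -> rho v = rho' v) -> sat I rho phi = sat I rho' phi.
Proof.
  induction phi; intros rho rho' E; simpl in *.
  - f_equal. apply map_ext_in. auto.
  - rewrite (E x), (E y); auto.
  - rewrite (IHphi rho rho'); auto.
  - rewrite (IHphi1 rho rho'), (IHphi2 rho rho'); auto.
  - f_equal. extensionality a. apply IHphi. intros v Hv. unfold upd.
    destruct (Nat.eqb_spec v x); auto.
  - apply sat_qcf_ext. intros b c. apply IHphi. intros v Hv. unfold upd.
    destruct (Nat.eqb_spec v y); auto. destruct (Nat.eqb_spec v x); auto.
Qed.

Lemma sat_closed {M : Type} (I : Sym -> list M -> Prop) phi rho rho' :
  (forall v, ~ fv phi v) -> sat I rho phi = sat I rho' phi.
Proof. intros C. apply sat_ext_env. intros v Hv. contradiction (C v Hv). Qed.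

Lemma sat_rename {M : Type} (I : Sym -> list M -> Prop) g phi :
  forall rho, sat I rho (rename g phi) = sat (fun s => I (g s)) rho phi.
Proof.
  induction phi; intros rho; simpl; try reflexivity.
  - rewrite IHphi; auto.
  - rewrite IHphi1, IHphi2; auto.
  - f_equal. extensionality a. apply IHphi.
  - apply sat_qcf_ext. intros b c. apply IHphi.
Qed.

Lemma sat_rename_back {M : Type} (I : Sym -> list M -> Prop) r rinv phi rho :
  (forall s, occurs phi s -> rinv (r s) = s) ->
  sat (fun u => I (rinv u)) rho (rename r phi) = sat I rho phi.
Proof.
  intros Hr. rewrite sat_rename. apply sat_ext_interp. intros s Os. rewrite Hr; auto.
Qed.

Lemma sat_bigand {M : Type} (m0 : M) (I : Sym -> list M -> Prop) rho l :
  sat I rho (bigand l) <-> forall phi, In phi l -> sat I rho phi.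
Proof.
  induction l as [|psi l IH]; simpl.
  - split; [tauto|]. intros _. exists m0. reflexivity.
  - rewrite IH. split.
    + intros [H1 H2] phi [<-|H]; auto.
    + intros H; split; auto.
Qed.

Lemma sat_bigand_in {M : Type} {I : Sym -> list M -> Prop} {rho l phi} :
  sat I rho (bigand l) -> In phi l -> sat I rho phi.
Proof.
  induction l as [|psi l IH]; simpl; [tauto|]. intros [H1 H2] [<-|Hp]; auto.
Qed.

Lemma reinterpret {M : Type} (I : Sym -> list M -> Prop) (g : Sym -> Sym) (D : Sym -> Prop) :
  inj_on D g -> exists I' : Sym -> list M -> Prop,
    (forall s, D s -> I' (g s) = I s) /\ (forall u, (forall s, D s -> u <> g s) -> I' u = I u).
Proof.
  intros g_inj.
  set (pre := fun u s => D s /\ u = g s).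
  exists (fun u => match excluded_middle_informative (exists s, pre u s) with
                   | left H => I (proj1_sig (constructive_indefinite_description _ H))
                   | right _ => I u end).
  split.
  - intros s Ds.
    destruct excluded_middle_informative as [H|H]; [|exfalso; apply H; exists s; split; auto].
    destruct constructive_indefinite_description as [t [Dt E]]. simpl. f_equal.
    symmetry. exact (g_inj s t Ds Dt E).
  - intros u Hu. destruct excluded_middle_informative as [[s [Ds E]]|]; [|reflexivity].
    contradiction (Hu s Ds E).
Qed.

End Semantics.

Section Consistency.
Variable Sym : Type.
Implicit Types (phi psi : form Sym) (S P Sigma : form Sym -> Prop).

Definition satisfies {M : Type} (I : Sym -> list M -> Prop) Sigma :=
  forall phi, Sigma phi -> forall rho : nat -> M, sat I rho phi.

Lemma consistent_sub S P : consistent S -> (forall phi, P phi -> S phi) -> consistent P.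
Proof. intros HS PS l Hl. apply HS. auto. Qed.

Lemma list_split S P (l : list (form Sym)) : (forall phi, In phi l -> S phi \/ P phi) ->
  exists l1 l2, (forall phi, In phi l1 -> S phi) /\ (forall phi, In phi l2 -> P phi) /\
    forall phi, In phi l -> In phi l1 \/ In phi l2.
Proof.
  induction l as [|a l IH]; intros Hl.
  - exists [], []. simpl. tauto.
  - destruct IH as (l1 & l2 & H1 & H2 & H12); [intros; apply Hl; simpl; auto|].
    destruct (Hl a (or_introl eq_refl)) as [Sa|Pa].
    + exists (a :: l1), l2. split; [intros phi [<-|H]; auto|split; [exact H2|]].
      intros phi [<-|H]; simpl; [auto|]. destruct (H12 phi H); auto.
    + exists l1, (a :: l2). split; [exact H1|split; [intros phi [<-|H]; auto|]].
      intros phi [<-|H]; simpl; [auto|]. destruct (H12 phi H); auto.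
Qed.

Lemma consistent_union S P :
  (forall l, (forall phi, In phi l -> S phi) ->
     exists (M : Type) (m0 : M) (I : Sym -> list M -> Prop),
       satisfies I (fun phi => In phi l) /\ satisfies I P) ->
  consistent (fun phi => S phi \/ P phi).
Proof.
  intros H l Hl. destruct (list_split S P l Hl) as (l1 & l2 & H1 & H2 & H12).
  destruct (H l1 H1) as (M & m0 & I & M1 & MP).
  exists M, m0, I. intros phi Hp. destruct (H12 phi Hp); auto.
Qed.

Lemma consistent_add_bigand Sigma l : consistent Sigma -> (forall phi, In phi l -> Sigma phi) ->
  consistent (fun phi => Sigma phi \/ phi = bigand l).
Proof.
  intros C Hl. apply consistent_union. intros l' Hl'.
  destruct (C (l' ++ l)) as (M & m0 & I & MI).
  { intros phi Hp. apply in_app_or in Hp as [Hp|Hp]; auto. }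
  exists M, m0, I. split.
  - intros phi Hp. apply MI, in_or_app. auto.
  - intros phi -> rho. apply (sat_bigand m0). intros phi Hp. apply MI, in_or_app. auto.
Qed.

Lemma inconsistent_add S phi : ~ consistent (fun psi => S psi \/ psi = phi) ->
  exists2 l, (forall psi, In psi l -> S psi) &
    forall (M : Type) (m0 : M) (I : Sym -> list M -> Prop),
      satisfies I (fun psi => In psi l) -> ~ (forall rho, sat I rho phi).
Proof.
  intros N. apply NNPP. intros Hl. apply N, consistent_union. intros l HlS.
  apply NNPP. intros Nm. apply Hl. exists l; [exact HlS|].
  intros M m0 I Ml Mphi. apply Nm. exists M, m0, I. split; [exact Ml|].
  intros psi -> rho. apply Mphi.
Qed.

Lemma consistent_add_or_neg S phi : consistent S -> (forall v, ~ fv phi v) ->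
  consistent (fun psi => S psi \/ psi = phi) \/ consistent (fun psi => S psi \/ psi = FNeg phi).
Proof.
  intros C Cl. apply NNPP. intros N. apply not_or_and in N as [N1 N2].
  apply inconsistent_add in N1 as [l1 H1 N1]. apply inconsistent_add in N2 as [l2 H2 N2].
  destruct (C (l1 ++ l2)) as (M & m0 & I & MI).
  { intros psi Hp. apply in_app_or in Hp as [Hp|Hp]; auto. }
  apply (N1 M m0 I); [intros psi Hp; apply MI, in_or_app; auto|]. intros rho.
  apply NNPP. intros Nphi. apply (N2 M m0 I); [intros psi Hp; apply MI, in_or_app; auto|].
  intros rho'. simpl. rewrite (sat_closed I phi rho' rho Cl). exact Nphi.
Qed.

Lemma consistent_chain_union (F : (form Sym -> Prop) -> Prop) :
  (forall X, F X -> consistent X) -> chain F -> (exists X, F X) -> consistent (bigunion F).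
Proof.
  intros FC Fch [X0 FX0] l Hl.
  assert (Hin : exists2 X, F X & forall phi, In phi l -> X phi).
  { clear FC. induction l as [|a l IH].
    - exists X0; [exact FX0|intros _ []].
    - destruct IH as [X FX HX]; [intros; apply Hl; simpl; auto|].
      destruct (Hl a (or_introl eq_refl)) as [Y FY Ya].
      destruct (Fch X Y FX FY) as [XY|YX].
      + exists Y; [exact FY|intros phi [<-|H]; auto].
      + exists X; [exact FX|intros phi [<-|H]; auto]. }
  destruct Hin as [X FX HX]. exact (FC X FX l HX).
Qed.

Lemma lindenbaum ar (tau : Sym -> Prop) Sigma :
  (forall phi, Sigma phi -> sentence_of ar tau phi) -> consistent Sigma ->
  exists Sigma', (forall phi, Sigma phi -> Sigma' phi) /\ consistent Sigma' /\
    (forall phi, Sigma' phi -> sentence_of ar tau phi) /\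
    (forall phi, sentence_of ar tau phi -> Sigma' phi \/ Sigma' (FNeg phi)).
Proof.
  intros Hs Hc.
  set (P := fun A => (forall phi, A phi -> sentence_of ar tau phi) /\ consistent A).
  destruct (@zorn_subsets_above _ P Sigma) as [A [[As Ac] SA] Amax]; [split; auto| |].
  - intros F FP Fch Fne. split.
    + intros phi [X FX Xp]. exact (proj1 (FP X FX) phi Xp).
    + apply consistent_chain_union; auto. intros X FX. exact (proj2 (FP X FX)).
  - exists A. split; [exact SA|split; [exact Ac|split; [exact As|]]].
    intros phi Sphi.
    assert (extend : forall psi, sentence_of ar tau psi ->
              consistent (fun chi => A chi \/ chi = psi) -> A psi).
    { intros psi Spsi C. apply (Amax (fun chi => A chi \/ chi = psi)); auto.
      split; [intros chi [H| ->]; auto|exact C]. }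
    destruct (consistent_add_or_neg phi Ac (proj1 (proj2 Sphi))) as [C|C]; [left|right];
      apply extend; auto.
Qed.

Lemma consistent_rename_new (Sigma : form Sym -> Prop) psi (g : Sym -> Sym) (U : list Sym) :
  inj_on (fun s => In s U) g -> (forall s, occurs psi s -> ~ In s U -> g s = s) ->
  (forall u, (exists2 phi, Sigma phi & occurs phi u) \/ (occurs psi u /\ ~ In u U) ->
     forall s, In s U -> u <> g s) ->
  consistent (fun phi => Sigma phi \/ phi = psi) ->
  consistent (fun phi => Sigma phi \/ phi = rename g psi).
Proof.
  intros g_inj gid unused C. apply consistent_union. intros l Hl.
  destruct (C (psi :: l)) as (M & m0 & I & MI); [intros phi [<-|Hp]; auto|].
  destruct (reinterpret I g_inj) as (I' & I'g & I'other).
  exists M, m0, I'. split.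
  - intros phi Hp rho. rewrite (sat_ext_interp I' I); [apply MI; right; exact Hp|].
    intros u Ou. apply I'other. apply unused. left. exists phi; auto.
  - intros phi -> rho. rewrite sat_rename.
    rewrite (sat_ext_interp _ I); [apply MI; left; reflexivity|].
    intros s Os. destruct (classic (In s U)) as [Hs|Hs]; [apply I'g, Hs|].
    rewrite (gid s Os Hs). apply I'other. apply unused. right. auto.
Qed.

End Consistency.

(** * The classes T^c, T^ab and T^ec *)

Section Classes.
Variables (Sym : Type) (ar : Sym -> nat) (K : Type).
Implicit Types (T : theory Sym) (phi psi chi : form Sym).

Definition consistent_with T chi := consistent (fun phi => sens T phi \/ phi = chi).

Definition closed_wf chi := sentence_of ar (fun _ => True) chi.

Lemma closed_wf_of_sentence (tau : Sym -> Prop) chi : sentence_of ar tau chi -> closed_wf chi.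
Proof. intros [W [Cl _]]. split; [exact W|split; [exact Cl|constructor]]. Qed.

(* By compactness, for complete theories this is equivalent to membership in T^ab. *)
Definition amalgamation T := forall chi1 chi2, closed_wf chi1 -> closed_wf chi2 ->
  (forall s, occurs chi1 s -> occurs chi2 s -> voc T s) ->
  consistent_with T chi1 -> consistent_with T chi2 ->
  consistent (fun phi => sens T phi \/ phi = chi1 \/ phi = chi2).

Lemma consistent_with_bigand T (U : theory Sym) l :
  consistent (sens U) -> (forall phi, sens T phi -> sens U phi) ->
  (forall phi, In phi l -> sens U phi) -> consistent_with T (bigand l).
Proof.
  intros CU TU lU. eapply consistent_sub; [exact (consistent_add_bigand l CU lU)|].
  intros phi [H|H]; auto.
Qed.

Lemma T_ab_of_amalgamation T : T_c ar K T -> amalgamation T -> T_ab ar K T.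
Proof.
  intros Tc Am. split; [exact Tc|].
  intros T1 T2 Hvoc [Th1 [C1 _]] [Th2 [C2 _]] Hsens l Hl.
  destruct (list_split _ _ l Hl) as (l1 & l2 & H1 & H2 & H12).
  assert (S1 : sentence_of ar (voc T1) (bigand l1)) by (apply sentence_bigand; auto).
  assert (S2 : sentence_of ar (voc T2) (bigand l2)) by (apply sentence_bigand; auto).
  destruct (Am (bigand l1) (bigand l2)) with (l := [bigand l1; bigand l2])
    as (M & m0 & I & MI).
  - exact (closed_wf_of_sentence S1).
  - exact (closed_wf_of_sentence S2).
  - intros s O1 O2. apply Hvoc. split; [apply S1|apply S2]; assumption.
  - eapply consistent_with_bigand; [exact C1|intros phi Hp; apply Hsens, Hp|exact H1].
  - eapply consistent_with_bigand; [exact C2|intros phi Hp; apply Hsens, Hp|exact H2].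
  - intros phi [<-|[<-|[]]]; auto.
  - exists M, m0, I. intros phi Hp rho.
    destruct (H12 phi Hp) as [Hp'|Hp'];
      [apply (sat_bigand_in (l := l1))|apply (sat_bigand_in (l := l2))];
      auto; apply MI; simpl; auto.
Qed.

Lemma amalgamation_of_T_ab T : (exists h : nat -> K, injective h) -> T_ab ar K T -> amalgamation T.
Proof.
  intros [h h_inj] [[[Th [_ Hcard]] Hcomp] Hab] chi1 chi2 W1 W2 Hcommon Cons1 Cons2.
  set (ext := fun chi =>
    Theory (fun s => voc T s \/ In s (syms chi)) (fun phi => sens T phi \/ phi = chi)).
  assert (ext_lt : forall chi, closed_wf chi -> consistent_with T chi -> T_lt ar K (ext chi)).
  { intros chi [W [Cl _]] Cons. split; [|split; [exact Cons|apply (card_lt_app h_inj), Hcard]].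
    intros phi [Hp| ->]; simpl.
    - exact (sentence_mono _ (fun s H => or_introl H) (Th phi Hp)).
    - split; [exact W|split; [exact Cl|intros s Os; right; apply syms_occurs, Os]]. }
  eapply consistent_sub;
    [refine (Hab (ext chi1) (ext chi2) _ (ext_lt _ W1 Cons1) (ext_lt _ W2 Cons2) _)|].
  - intros s. simpl. rewrite !syms_occurs. split; [intros V; auto|].
    intros [[V|O1] [V'|O2]]; auto.
  - intros phi. simpl. split; [intros H; auto|].
    intros [[H|E1] [H'|E2]]; auto. subst phi.
    assert (S : sentence_of ar (voc T) chi1).
    { destruct W1 as [W [Cl _]]. split; [exact W|split; [exact Cl|]].
      intros s Os. apply Hcommon; [exact Os|rewrite <- E2; exact Os]. }
    destruct (Hcomp chi1 S) as [H|H]; [exact H|exfalso].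
    destruct (Cons1 [chi1; FNeg chi1]) as (M & m0 & I & MI).
    { intros phi [<-|[<-|[]]]; auto. }
    apply (MI (FNeg chi1) (or_intror (or_introl eq_refl)) (fun _ => m0)).
    apply MI. left. reflexivity.
  - intros phi [H|[H|H]]; simpl; auto.
Qed.

End Classes.

Section ExistentialClosure.
Variables (Sym : Type) (ar : Sym -> nat) (K : Type).
Implicit Types (T : theory Sym) (phi psi chi : form Sym).

(* The list form of [T_ec] recast as a renaming [g] moving the new symbols [S] into [voc T]. *)
Definition ec_witness T (S : list Sym) psi (g : Sym -> Sym) :=
  (forall s, In s S -> voc T (g s) /\ ar (g s) = ar s) /\ inj_on (fun s => In s S) g /\
  (forall s, ~ In s S -> g s = s) /\ sens T (rename g psi).

Definition ec_property T := forall (S : list Sym) psi,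
  NoDup S -> (forall s, In s S -> ~ voc T s) ->
  sentence_of ar (fun s => voc T s \/ In s S) psi -> consistent_with T psi ->
  exists g, ec_witness T S psi g.

Lemma T_ec_iff T : T_ec ar K T <-> T_c ar K T /\ ec_property T.
Proof.
  split.
  - intros [Tc Hec]. split; [exact Tc|]. intros S psi ND HS Spsi Cons.
    destruct (Hec S psi ND HS Spsi Cons) as (S' & L & ND' & Ar & V & g & gS & gid & gT).
    exists g. split; [|split; [|split; [exact gid|exact gT]]].
    + intros s Hs. destruct (In_nth S s s Hs) as [i [Hi Ei]]. rewrite <- Ei.
      rewrite gS by exact Hi. split; [apply V, nth_In; lia|apply Ar, Hi].
    + intros s t Hs Ht E.
      destruct (In_nth S s s Hs) as [i [Hi Ei]]. destruct (In_nth S t s Ht) as [j [Hj Ej]].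
      rewrite <- Ei, <- Ej in E |- *. rewrite !gS in E by assumption. f_equal.
      apply (proj1 (NoDup_nth S' s) ND' i j); [lia|lia|exact E].
  - intros [Tc Hec]. split; [exact Tc|]. intros S psi ND HS Spsi Cons.
    destruct (Hec S psi ND HS Spsi Cons) as (g & Hg & g_inj & gid & gT).
    assert (nth_map : forall i d, i < length S -> nth i (map g S) d = g (nth i S d)).
    { intros i d Hi. rewrite (nth_indep _ d (g d)) by (rewrite length_map; exact Hi).
      apply map_nth. }
    exists (map g S). split; [|split; [|split; [|split]]].
    + apply length_map.
    + apply NoDup_map_NoDup_ForallPairs; [|exact ND]. intros s t Hs Ht. exact (g_inj s t Hs Ht).
    + intros i d Hi. rewrite nth_map by exact Hi. apply Hg, nth_In, Hi.
    + intros s Hs. apply in_map_iff in Hs as [t [<- Ht]]. apply Hg, Ht.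
    + exists g. split; [|split; [exact gid|exact gT]].
      intros i d Hi. symmetry. apply nth_map, Hi.
Qed.

(* Push the new symbols of [chi1] into [voc T] by [T_ec]; reading them back afterwards
   does not disturb [chi2], whose shared symbols lie in [voc T]. *)
Lemma amalgamation_of_ec T : is_theory ar T -> ec_property T -> amalgamation ar T.
Proof.
  intros Th Hec chi1 chi2 [W1 [Cl1 _]] _ Hcommon Cons1 Cons2.
  destruct (exists_NoDup_filter (fun s => ~ voc T s) (syms chi1)) as [S1 ND HS1].
  assert (Spsi : sentence_of ar (fun s => voc T s \/ In s S1) chi1).
  { split; [exact W1|split; [exact Cl1|]]. intros s Os.
    destruct (classic (voc T s)) as [V|V]; [left; exact V|right].
    apply HS1. rewrite syms_occurs. auto. }
  destruct (Hec S1 chi1 ND (fun s Hs => proj2 (proj1 (HS1 s) Hs)) Spsi Cons1)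
    as (g & _ & _ & gid & gT).
  apply consistent_union. intros l Hl.
  destruct (Cons2 (rename g chi1 :: chi2 :: l)) as (M & m0 & I & MI).
  { intros phi [<-|[<-|Hp]]; auto. }
  set (I' := fun s => if excluded_middle_informative (In s S1) then I (g s) else I s).
  assert (agree : forall phi, (forall s, occurs phi s -> ~ In s S1) ->
            forall rho, sat I' rho phi = sat I rho phi).
  { intros phi Hphi. apply sat_ext_interp. intros s Os. unfold I'.
    destruct excluded_middle_informative as [Hs|]; [contradiction (Hphi s Os Hs)|reflexivity]. }
  assert (notS1 : forall s, voc T s -> ~ In s S1) by (intros s V Hs; apply HS1 in Hs; tauto).
  exists M, m0, I'. split.
  - intros phi Hp rho. rewrite agree; [apply MI; simpl; auto|].
    intros s Os. apply notS1. exact (proj2 (proj2 (Th phi (Hl phi Hp))) s Os).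
  - intros phi [-> | ->] rho.
    + assert (E : sat I' rho chi1 = sat I rho (rename g chi1)).
      { rewrite sat_rename. apply sat_ext_interp. intros s Os. unfold I'.
        destruct excluded_middle_informative as [Hs|Hs]; [reflexivity|].
        rewrite (gid s Hs). reflexivity. }
      rewrite E. apply MI. simpl. auto.
    + rewrite agree; [apply MI; simpl; auto|].
      intros s Os Hs. apply HS1 in Hs as [Os1 V].
      apply V, Hcommon; [apply syms_occurs, Os1|exact Os].
Qed.

End ExistentialClosure.

Section FirstProperties.
Variables (Sym : Type) (ar : Sym -> nat) (K : Type).
Implicit Types (T : theory Sym) (phi psi chi : form Sym).

Lemma T_ab_of_T_ec T : T_ec ar K T -> T_ab ar K T.
Proof.
  intros Hec. apply T_ec_iff in Hec as [Tc Hec].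
  apply (T_ab_of_amalgamation Tc), amalgamation_of_ec; [exact (proj1 (proj1 Tc))|exact Hec].
Qed.

Lemma complete_extension T : T_lt ar K T ->
  exists T' : theory Sym, T_c ar K T' /\ (forall s, voc T' s <-> voc T s) /\
    (forall phi, sens T phi -> sens T' phi).
Proof.
  intros [Th [C Hcard]].
  destruct (lindenbaum Th C) as (Sigma & TS & CS & Th' & Hcomp).
  exists (Theory (voc T) Sigma).
  split; [split; [split; [exact Th'|split; [exact CS|exact Hcard]]|exact Hcomp]|simpl; tauto].
Qed.

(* Induction on the list of indices: the sentences taken from [Ti i] and those taken
   from the other theories share only symbols of [voc T]. *)
Lemma consistent_with_bigand_family {Idx : Type} {Ti : Idx -> theory Sym} {T} :
  (forall i j, i <> j -> forall s, voc (Ti i) s /\ voc (Ti j) s <-> voc T s) ->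
  (forall i, T_lt ar K (Ti i)) -> consistent (sens T) -> amalgamation ar T ->
  (forall i phi, sens T phi -> sens (Ti i) phi) ->
  forall (idxs : list Idx) l, (forall phi, In phi l -> exists i, In i idxs /\ sens (Ti i) phi) ->
  consistent_with T (bigand l).
Proof.
  intros Hv Hlt CT Am HTi idxs. induction idxs as [|i idxs IH]; intros l Hl.
  - destruct l as [|phi l]; [|destruct (Hl phi (or_introl eq_refl)) as (? & [] & _)].
    eapply consistent_sub; [exact (consistent_add_bigand [] CT (fun _ H => match H with end))|].
    intros phi [H|H]; auto.
  - destruct (list_split (sens (Ti i))
                (fun phi => exists j, In j idxs /\ i <> j /\ sens (Ti j) phi) l)
      as (li & lr & Hi & Hr & Hir).
    { intros phi Hp. destruct (classic (sens (Ti i) phi)) as [H|H]; [left; exact H|right].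
      destruct (Hl phi Hp) as (j & [<-|Hj] & Sj); [contradiction|].
      exists j. split; [exact Hj|split; [intros <-; contradiction|exact Sj]]. }
    destruct (Hlt i) as [Thi [Ci _]].
    assert (Slr : forall phi, In phi lr -> exists j, i <> j /\ sentence_of ar (voc (Ti j)) phi).
    { intros phi Hp. destruct (Hr phi Hp) as (j & _ & ij & Sj).
      exists j. split; [exact ij|apply (proj1 (Hlt j)), Sj]. }
    assert (C : consistent (fun phi => sens T phi \/ phi = bigand li \/ phi = bigand lr)).
    { apply Am.
      - apply (closed_wf_of_sentence (tau := voc (Ti i))), sentence_bigand.
        intros phi Hp. apply Thi, Hi, Hp.
      - apply sentence_bigand. intros phi Hp. destruct (Slr phi Hp) as (j & _ & Sj).
        exact (closed_wf_of_sentence Sj).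
      - intros s Oi Or.
        apply occurs_bigand in Oi as [phi Hp Os]. apply occurs_bigand in Or as [psi Hq Os'].
        destruct (Slr psi Hq) as (j & ij & Sj). apply (Hv i j ij). split.
        + exact (proj2 (proj2 (Thi phi (Hi phi Hp))) s Os).
        + exact (proj2 (proj2 Sj) s Os').
      - eapply consistent_with_bigand; [exact Ci|apply HTi|exact Hi].
      - apply IH. intros phi Hp. destruct (Hr phi Hp) as (j & Hj & _ & Sj). eauto. }
    apply consistent_union. intros l' Hl'.
    destruct (C (bigand li :: bigand lr :: l')) as (M & m0 & J & MJ).
    { intros phi [<-|[<-|Hp]]; auto. }
    exists M, m0, J. split.
    + intros phi Hp. apply MJ. simpl. auto.
    + intros phi -> rho. apply (sat_bigand m0). intros phi Hp.
      destruct (Hir phi Hp) as [H|H];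
        [apply (sat_bigand_in (l := li))|apply (sat_bigand_in (l := lr))];
        auto; apply MJ; simpl; auto.
Qed.

Lemma union_consistent_over_ab (Idx : Type) (Ti : Idx -> theory Sym) T :
  (forall i j, i <> j -> forall s, voc (Ti i) s /\ voc (Ti j) s <-> voc T s) ->
  (forall i, T_lt ar K (Ti i)) -> T_ab ar K T -> (exists h : nat -> K, injective h) ->
  (forall i phi, sens T phi -> sens (Ti i) phi) ->
  consistent (fun phi => exists i, sens (Ti i) phi).
Proof.
  intros Hv Hlt Hab Kinf HTi l Hl.
  assert (Hidx : exists idxs, forall phi, In phi l -> exists i, In i idxs /\ sens (Ti i) phi).
  { clear Hab. induction l as [|a l IH].
    - exists []. intros _ [].
    - destruct IH as [idxs His]; [intros; apply Hl; simpl; auto|].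
      destruct (Hl a (or_introl eq_refl)) as [i Si].
      exists (i :: idxs). intros phi [<-|Hp]; [exists i; simpl; auto|].
      destruct (His phi Hp) as (j & Hj & Sj). exists j. simpl. auto. }
  destruct Hidx as [idxs His].
  destruct (consistent_with_bigand_family Hv Hlt (proj1 (proj2 (proj1 (proj1 Hab))))
              (amalgamation_of_T_ab Kinf Hab) HTi idxs l His [bigand l]) as (M & m0 & J & MJ).
  { intros phi [<-|[]]; auto. }
  exists M, m0, J. intros phi Hp rho.
  exact (sat_bigand_in (MJ _ (or_introl eq_refl) rho) Hp).
Qed.

End FirstProperties.

(** * Invariance under isomorphisms of vocabularies *)

Section Renaming.
Variables (Sym : Type) (ar : Sym -> nat) (K : Type).
Variable h : nat -> K.
Hypothesis h_inj : injective h.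
Hypothesis Hbig : forall n, exists h : K -> {s : Sym | ar s = n}, injective h.
Variables (T : theory Sym) (f : Sym -> Sym) (tau2 : Sym -> Prop).
Hypothesis f_inj : forall {s t}, voc T s -> voc T t -> f s = f t -> s = t.
Hypothesis f_ar : forall {s}, voc T s -> ar (f s) = ar s.
Hypothesis tau2_image : forall t, tau2 t <-> exists s, voc T s /\ f s = t.
Hypothesis T_th : is_theory ar T.

Local Notation T' := (rename_theory f tau2 T).
Implicit Types (phi psi chi : form Sym).

Definition finv t := epsilon (inhabits t) (fun s => voc T s /\ f s = t).

Lemma finv_spec {t} : tau2 t -> voc T (finv t) /\ f (finv t) = t.
Proof. intros Ht. unfold finv. apply epsilon_spec, tau2_image, Ht. Qed.

Lemma finv_f s : voc T s -> finv (f s) = s.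
Proof.
  intros Hs. destruct (finv_spec (t := f s)) as [V E]; [apply tau2_image; eauto|].
  exact (f_inj V Hs E).
Qed.

Lemma f_tau2 {s} : voc T s -> tau2 (f s).
Proof. intros Hs. apply tau2_image. eauto. Qed.

Lemma occurs_theory {phi s} : sens T phi -> occurs phi s -> voc T s.
Proof. intros Hp Os. exact (proj2 (proj2 (T_th phi Hp)) s Os). Qed.

Lemma sat_rename_theory {M : Type} (I : Sym -> list M -> Prop) (r : Sym -> Sym) phi rho :
  (forall s, voc T s -> r (f s) = s) -> sens T phi ->
  sat (fun u => I (r u)) rho (rename f phi) = sat I rho phi.
Proof. intros Hr Hp. apply sat_rename_back. intros s Os. apply Hr, (occurs_theory Hp Os). Qed.

Lemma sens_image_preimage {l : list (form Sym)} : (forall psi, In psi l -> sens T' psi) ->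
  exists l0, l = map (rename f) l0 /\ forall phi, In phi l0 -> sens T phi.
Proof.
  intros Hl. apply list_preimage. intros psi Hp. destruct (Hl psi Hp) as [phi [Sp ->]]. eauto.
Qed.

Lemma T_lt_rename : T_lt ar K T -> T_lt ar K T'.
Proof.
  intros [_ [C Hcard]]. split; [|split].
  - intros psi [phi [Sp ->]]. destruct (T_th phi Sp) as [W [Cl _]].
    apply sentence_rename; [|exact W|exact Cl].
    intros s Os. pose proof (occurs_theory Sp Os). split; [auto|apply f_tau2; auto].
  - intros l Hl. destruct (sens_image_preimage Hl) as [l0 [-> H0]].
    destruct (C l0 H0) as (M & m0 & I & MI).
    exists M, m0, (fun u => I (finv u)). intros psi Hp rho.
    apply in_map_iff in Hp as [phi [<- Hp]].
    rewrite sat_rename_theory; [apply MI, Hp|exact finv_f|exact (H0 phi Hp)].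
  - apply (card_ltP h) in Hcard as [[F _ F_inj] N]. apply (card_ltP h). split.
    + exists (fun t => F (finv t)); [constructor|]. intros x y Hx Hy E.
      apply F_inj in E; try apply finv_spec; auto.
      rewrite <- (proj2 (finv_spec Hx)), <- (proj2 (finv_spec Hy)), E. reflexivity.
    + intros [g gt g_inj]. apply N. exists (fun k => finv (g k)).
      * intros k _. apply finv_spec, gt, I.
      * intros a b _ _ E. apply g_inj; [constructor|constructor|].
        rewrite <- (proj2 (finv_spec (gt a I))), <- (proj2 (finv_spec (gt b I))), E. reflexivity.
Qed.

Lemma T_c_rename : T_c ar K T -> T_c ar K T'.
Proof.
  intros [Hlt Hcomp]. split; [exact (T_lt_rename Hlt)|].
  intros psi [W [Cl O]]. simpl in O.
  assert (Epsi : rename f (rename finv psi) = psi).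
  { rewrite rename_comp. rewrite <- (rename_id psi) at 2. apply rename_ext.
    intros s Os. apply finv_spec, O, Os. }
  assert (S : sentence_of ar (voc T) (rename finv psi)).
  { apply sentence_rename; [|exact W|exact Cl]. intros s Os.
    destruct (finv_spec (O s Os)) as [V E]. split; [rewrite <- (f_ar V), E; reflexivity|exact V]. }
  destruct (Hcomp _ S) as [H|H]; [left|right]; eexists;
    split; [exact H| |exact H|]; simpl; congruence.
Qed.

Lemma pullback (U : list Sym) : card_lt K (voc T) -> (forall t, In t U -> ~ tau2 t) ->
  exists r rinv : Sym -> Sym,
    (forall t, tau2 t -> r t = finv t) /\ (forall t, In t U -> ~ voc T (r t)) /\
    (forall t, tau2 t \/ In t U -> rinv (r t) = t /\ ar (r t) = ar t) /\
    (forall s, voc T s -> rinv s = f s).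
Proof.
  intros Hcard HU.
  destruct (fresh_symbols ar h_inj Hbig U [] Hcard) as (Fr & NDF & LF & AF & DF).
  set (r := fun t => if excluded_middle_informative (tau2 t) then finv t
                     else if excluded_middle_informative (In t U) then nth (idx t U) Fr t else t).
  set (rinv := fun u =>
    if excluded_middle_informative (voc T u) then f u
    else if excluded_middle_informative (In u Fr) then nth (idx u Fr) U u else u).
  assert (rU : forall t, In t U -> r t = nth (idx t U) Fr t).
  { intros t Ht. unfold r.
    destruct excluded_middle_informative as [A|_]; [contradiction (HU t Ht A)|].
    destruct excluded_middle_informative; tauto. }
  assert (rUF : forall t, In t U -> In (r t) Fr).
  { intros t Ht. rewrite rU by exact Ht. apply nth_In. rewrite LF. apply idx_lt, Ht. }
  exists r, rinv. split; [|split; [|split]].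
  - intros t Ht. unfold r. destruct excluded_middle_informative; tauto.
  - intros t Ht. exact (proj1 (DF _ (rUF t Ht))).
  - intros t [Ht|Ht].
    + unfold r. destruct excluded_middle_informative as [_|]; [|contradiction].
      destruct (finv_spec Ht) as [V E]. unfold rinv.
      destruct excluded_middle_informative; [|contradiction].
      split; [exact E|rewrite <- (f_ar V), E; reflexivity].
    + pose proof (rUF t Ht) as HF. unfold rinv.
      destruct excluded_middle_informative as [A|_]; [contradiction (proj1 (DF _ HF) A)|].
      destruct excluded_middle_informative as [_|]; [|contradiction].
      rewrite rU by exact Ht. rewrite idx_nth by (auto; rewrite LF; apply idx_lt, Ht).
      split; [apply nth_idx, Ht|]. rewrite AF with (d' := t) by (apply idx_lt, Ht).
      rewrite nth_idx by exact Ht.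
      reflexivity.
  - intros s Hs. unfold rinv. destruct excluded_middle_informative; tauto.
Qed.

Lemma consistent_pullback (r rinv : Sym -> Sym) (D : Sym -> Prop) psi :
  (forall t, D t -> rinv (r t) = t) -> (forall s, voc T s -> rinv s = f s) ->
  consistent_with T' psi -> (forall t, occurs psi t -> D t) ->
  consistent_with T (rename r psi).
Proof.
  intros Hr Hrf C HD. apply consistent_union. intros l Hl.
  destruct (C (psi :: map (rename f) l)) as (M & m0 & I & MI).
  { intros phi [<-|Hp]; [right; reflexivity|left].
    apply in_map_iff in Hp as [x [<- Hx]]. exists x. auto. }
  exists M, m0, (fun u => I (rinv u)). split.
  - intros phi Hp rho. rewrite (sat_ext_interp _ (fun s => I (f s))).
    + rewrite <- sat_rename. apply MI. right. apply in_map, Hp.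
    + intros s Os. rewrite Hrf; [reflexivity|exact (occurs_theory (Hl phi Hp) Os)].
  - intros phi -> rho. rewrite sat_rename_back; [apply MI; left; reflexivity|].
    intros s Os. apply Hr, HD, Os.
Qed.

Lemma amalgamation_rename : card_lt K (voc T) -> amalgamation ar T -> amalgamation ar T'.
Proof.
  intros Hcard Am chi1 chi2 [W1 [Cl1 _]] [W2 [Cl2 _]] Hcommon C1 C2.
  destruct (exists_NoDup_filter (fun t => ~ tau2 t) (syms chi1 ++ syms chi2)) as [U _ HU].
  destruct (pullback U Hcard) as (r & rinv & rT & rU & rr & rf); [intros t Ht; apply HU, Ht|].
  set (D := fun t => tau2 t \/ In t U).
  assert (D1 : forall t, occurs chi1 t -> D t).
  { intros t Ot. destruct (classic (tau2 t)) as [A|A]; [left; exact A|right].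
    apply HU. rewrite in_app_iff, !syms_occurs. auto. }
  assert (D2 : forall t, occurs chi2 t -> D t).
  { intros t Ot. destruct (classic (tau2 t)) as [A|A]; [left; exact A|right].
    apply HU. rewrite in_app_iff, !syms_occurs. auto. }
  assert (W : forall chi, wf ar chi -> (forall v, ~ fv chi v) -> (forall t, occurs chi t -> D t) ->
            closed_wf ar (rename r chi)).
  { intros chi Wc Clc HD. apply sentence_rename; [|exact Wc|exact Clc].
    intros s Os. split; [apply rr, HD, Os|constructor]. }
  assert (Am' : consistent (fun phi => sens T phi \/ phi = rename r chi1 \/ phi = rename r chi2)).
  { apply Am.
    - exact (W chi1 W1 Cl1 D1).
    - exact (W chi2 W2 Cl2 D2).
    - intros s O1 O2. apply occurs_rename in O1 as [t1 O1 <-].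
      apply occurs_rename in O2 as [t2 O2 E].
      assert (E' : t2 = t1).
      { rewrite <- (proj1 (rr t1 (D1 t1 O1))), <- (proj1 (rr t2 (D2 t2 O2))), E. reflexivity. }
      subst t2. rewrite rT by exact (Hcommon t1 O1 O2). apply finv_spec, Hcommon; assumption.
    - apply (consistent_pullback r rinv D); auto. intros t Dt. apply rr, Dt.
    - apply (consistent_pullback r rinv D); auto. intros t Dt. apply rr, Dt. }
  apply consistent_union. intros l Hl.
  destruct (sens_image_preimage Hl) as [l0 [-> H0]].
  destruct (Am' (rename r chi1 :: rename r chi2 :: l0)) as (M & m0 & J & MJ).
  { intros phi [<-|[<-|Hp]]; auto. }
  exists M, m0, (fun t => J (r t)). split.
  - intros psi Hp rho. apply in_map_iff in Hp as [phi [<- Hp]].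
    rewrite sat_rename_theory; [apply MJ; simpl; auto| |exact (H0 phi Hp)].
    intros s Hs. rewrite rT by exact (f_tau2 Hs). exact (finv_f s Hs).
  - intros psi [-> | ->] rho; rewrite <- sat_rename; apply MJ; simpl; auto.
Qed.

Lemma T_ab_rename : T_ab ar K T -> T_ab ar K T'.
Proof.
  intros Hab. pose proof Hab as [Tc _].
  apply T_ab_of_amalgamation; [exact (T_c_rename Tc)|].
  apply amalgamation_rename; [exact (proj2 (proj2 (proj1 Tc)))|].
  exact (amalgamation_of_T_ab (ex_intro _ h h_inj) Hab).
Qed.

(* The witness for [T'] is [f ∘ g ∘ r] on [S]. *)
Lemma ec_witness_rename (S : list Sym) psi (r rinv g : Sym -> Sym) :
  (forall t, tau2 t -> r t = finv t) -> (forall t, In t S -> ~ voc T (r t)) ->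
  (forall t, tau2 t \/ In t S -> rinv (r t) = t /\ ar (r t) = ar t) ->
  (forall s, occurs psi s -> tau2 s \/ In s S) ->
  ec_witness ar T (map r S) (rename r psi) g -> exists g2, ec_witness ar T' S psi g2.
Proof.
  intros rT rS rr O (Hg & g_inj & gid & gT).
  assert (r_inj : inj_on (fun t => In t S) r).
  { intros t t' Ht Ht' E.
    rewrite <- (proj1 (rr t (or_intror Ht))), <- (proj1 (rr t' (or_intror Ht'))), E.
    reflexivity. }
  set (g2 := fun s => if excluded_middle_informative (In s S) then f (g (r s)) else s).
  assert (g2S : forall s, In s S -> g2 s = f (g (r s))).
  { intros s Hs. unfold g2. destruct excluded_middle_informative; tauto. }
  assert (gr : forall s, In s S -> voc T (g (r s)) /\ ar (g (r s)) = ar s).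
  { intros s Hs. destruct (Hg (r s) (in_map r S s Hs)) as [V A].
    split; [exact V|rewrite A; apply rr; right; exact Hs]. }
  exists g2. split; [|split; [|split]].
  - intros s Hs. rewrite g2S by exact Hs. destruct (gr s Hs) as [V A].
    split; [apply f_tau2, V|rewrite (f_ar V); exact A].
  - intros s t Hs Ht E. rewrite !g2S in E by assumption.
    apply f_inj in E; [|apply gr, Hs|apply gr, Ht].
    apply g_inj in E; [|apply in_map, Hs|apply in_map, Ht]. exact (r_inj s t Hs Ht E).
  - intros s Hs. unfold g2. destruct excluded_middle_informative; tauto.
  - exists (rename g (rename r psi)). split; [exact gT|].
    rewrite !rename_comp. apply rename_ext. intros t Ot. unfold g2.
    destruct excluded_middle_informative as [Ht|Ht]; [reflexivity|].
    destruct (O t Ot) as [H2|]; [|contradiction].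
    rewrite rT by exact H2. rewrite gid; [symmetry; exact (proj2 (finv_spec H2))|].
    intros Hin. apply in_map_iff in Hin as [t' [E Ht']].
    apply (rS t' Ht'). rewrite E. apply finv_spec, H2.
Qed.

Lemma T_ec_rename : T_ec ar K T -> T_ec ar K T'.
Proof.
  intros Hec. apply T_ec_iff in Hec as [Tc Hec]. apply T_ec_iff. split; [exact (T_c_rename Tc)|].
  intros S psi NDS HS [W [Cl O]] Cons. simpl in HS, O.
  destruct (pullback S (proj2 (proj2 (proj1 Tc))) HS) as (r & rinv & rT & rS & rr & rf).
  destruct (Hec (map r S) (rename r psi)) as [g Hg]; [| | | |eapply ec_witness_rename; eassumption].
  - apply NoDup_map_NoDup_ForallPairs; [|exact NDS]. intros t t' Ht Ht' E.
    rewrite <- (proj1 (rr t (or_intror Ht))), <- (proj1 (rr t' (or_intror Ht'))), E.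
    reflexivity.
  - intros s Hs. apply in_map_iff in Hs as [t [<- Ht]]. exact (rS t Ht).
  - apply sentence_rename; [|exact W|exact Cl]. intros t Ot. split; [apply rr, O, Ot|].
    destruct (O t Ot) as [Ht|Ht].
    + left. rewrite rT by exact Ht. apply finv_spec, Ht.
    + right. apply in_map, Ht.
  - apply (consistent_pullback r rinv (fun t => tau2 t \/ In t S)); auto. intros t Dt. apply rr, Dt.
Qed.

End Renaming.

(** * Existentially closed extensions *)

Section Coding.
Variables (Sym : Type) (A : Type) (pA : A * A -> A) (nA : nat -> A).
Hypothesis pA_inj : injective pA.
Hypothesis nA_inj : injective nA.

Lemma pA_tag_inj m n x y : pA (nA m, x) = pA (nA n, y) -> m = n /\ x = y.
Proof. intros E. apply pA_inj in E. injection E as E1 E2. apply nA_inj in E1. auto. Qed.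

Lemma pA_pair_inj x y x' y' : pA (x, y) = pA (x', y') -> x = x' /\ y = y'.
Proof. intros E. apply pA_inj in E. injection E. auto. Qed.

Fixpoint vars_code (xs : list nat) : A :=
  match xs with
  | [] => pA (nA 0, nA 0)
  | x :: xs => pA (nA 1, pA (nA x, vars_code xs))
  end.

Lemma vars_code_inj : injective vars_code.
Proof.
  intros xs. induction xs as [|x xs IH]; intros [|y ys] E; simpl in E; auto;
    apply pA_tag_inj in E as [E1 E2]; try discriminate.
  apply pA_pair_inj in E2 as [E3 E4]. apply nA_inj in E3. apply IH in E4. congruence.
Qed.

Variable symcode : Sym -> A.

Fixpoint form_code (phi : form Sym) : A :=
  match phi with
  | FAtom R xs => pA (nA 0, pA (symcode R, vars_code xs))
  | FEq x y => pA (nA 1, pA (nA x, nA y))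
  | FNeg p => pA (nA 2, form_code p)
  | FAnd p q => pA (nA 3, pA (form_code p, form_code q))
  | FEx x p => pA (nA 4, pA (nA x, form_code p))
  | FQcf x y p => pA (nA 5, pA (nA x, pA (nA y, form_code p)))
  end.

Lemma form_code_inj (D : Sym -> Prop) phi psi : inj_on D symcode ->
  (forall s, occurs phi s -> D s) -> (forall s, occurs psi s -> D s) ->
  form_code phi = form_code psi -> phi = psi.
Proof.
  intros sc_inj. revert psi.
  induction phi as [R xs|x y|p IH|p IHp q IHq|x p IH|x y p IH];
    intros [R' xs'|x' y'|p'|p' q'|x' p'|x' y' p'] Dphi Dpsi E; simpl in *;
    apply pA_tag_inj in E as [E0 E]; try discriminate.
  - apply pA_pair_inj in E as [E1 E2]. apply sc_inj in E1; auto. apply vars_code_inj in E2.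
    congruence.
  - apply pA_pair_inj in E as [E1 E2]. apply nA_inj in E1, E2. congruence.
  - f_equal. apply IH; auto.
  - apply pA_pair_inj in E as [E1 E2]. f_equal; [apply IHp|apply IHq]; auto.
  - apply pA_pair_inj in E as [E1 E2]. apply nA_inj in E1. f_equal; [exact E1|apply IH; auto].
  - apply pA_pair_inj in E as [E1 E2]. apply pA_pair_inj in E2 as [E2 E3]. apply nA_inj in E1, E2.
    f_equal; [exact E1|exact E2|apply IH; auto].
Qed.

End Coding.

Section Construction.
Variables (Sym : Type) (ar : Sym -> nat) (K : Type) (T : theory Sym).
Variables (A : Type) (pA : A * A -> A) (nA : nat -> A) (tA : Sym -> A) (fr : nat -> A -> Sym).
Hypothesis pA_inj : injective pA.
Hypothesis nA_inj : injective nA.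
Hypothesis tA_inj : inj_on (voc T) tA.
Hypothesis fr_ar : forall a c, ar (fr a c) = a.
Hypothesis fr_fresh : forall {a c}, ~ voc T (fr a c).
Hypothesis fr_inj : forall a c b d, fr a c = fr b d -> a = b /\ c = d.
Implicit Types (phi psi chi : form Sym).

Definition coded s := voc T s \/ exists a c, s = fr a c.

Definition fr_index s : nat * A := epsilon (inhabits (0, nA 0)) (fun p => s = fr (fst p) (snd p)).

Lemma fr_index_fr a c : fr_index (fr a c) = (a, c).
Proof.
  unfold fr_index.
  pose proof (epsilon_spec (inhabits (0, nA 0)) (fun p => fr a c = fr (fst p) (snd p))
    (ex_intro _ (a, c) eq_refl)) as E.
  destruct epsilon as [b d]. simpl in E. apply fr_inj in E as [-> ->]. reflexivity.
Qed.

Definition symcode s : A :=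
  if excluded_middle_informative (voc T s) then pA (nA 0, tA s)
  else pA (nA 1, pA (nA (fst (fr_index s)), snd (fr_index s))).

Lemma symcode_inj : inj_on coded symcode.
Proof.
  intros s t Hs Ht E. unfold symcode in E.
  destruct (excluded_middle_informative (voc T s)) as [Vs|Vs];
  destruct (excluded_middle_informative (voc T t)) as [Vt|Vt];
    apply (pA_tag_inj pA_inj nA_inj) in E as [E0 E]; try discriminate.
  - apply tA_inj; assumption.
  - destruct Hs as [|(a & c & ->)]; [contradiction|].
    destruct Ht as [|(b & d & ->)]; [contradiction|].
    rewrite !fr_index_fr in E. apply (pA_pair_inj pA_inj) in E as [E1 E2]. apply nA_inj in E1.
    simpl in *. congruence.
Qed.

Definition fcode := form_code pA nA symcode.

(* A sentence [chi] keeps its new symbols as placeholders; [witness chi i a] is the fresh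
   symbol that will replace the [i]-th placeholder of arity [a] in [chi]. *)
Definition placeholder i a := fr a (pA (nA 0, nA i)).
Definition witness chi i a := fr a (pA (nA 1, pA (fcode chi, nA i))).
Definition is_placeholder s := exists i a, s = placeholder i a.

Definition ph_index s : nat * nat :=
  epsilon (inhabits (0, 0)) (fun p => s = placeholder (fst p) (snd p)).

Lemma ph_index_placeholder i a : ph_index (placeholder i a) = (i, a).
Proof.
  unfold ph_index.
  pose proof (epsilon_spec (inhabits (0, 0))
    (fun p => placeholder i a = placeholder (fst p) (snd p)) (ex_intro _ (i, a) eq_refl)) as E.
  destruct epsilon as [j b]. simpl in E. apply fr_inj in E as [-> E].
  apply (pA_tag_inj pA_inj nA_inj) in E as [_ E]. apply nA_inj in E. congruence.
Qed.

Lemma witness_not_placeholder chi i a : ~ is_placeholder (witness chi i a).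
Proof.
  intros (j & b & E). apply fr_inj in E as [_ E].
  apply (pA_tag_inj pA_inj nA_inj) in E as [E _]. discriminate.
Qed.

Lemma witness_inj chi chi' i a i' a' :
  (forall s, occurs chi s -> coded s) -> (forall s, occurs chi' s -> coded s) ->
  witness chi i a = witness chi' i' a' -> chi = chi' /\ i = i' /\ a = a'.
Proof.
  intros C C' E. apply fr_inj in E as [Ea E]. apply (pA_tag_inj pA_inj nA_inj) in E as [_ E].
  apply (pA_pair_inj pA_inj) in E as [E1 E2]. apply nA_inj in E2.
  apply (form_code_inj pA_inj nA_inj chi chi' symcode_inj C C') in E1. auto.
Qed.

Fixpoint stage (n : nat) : Sym -> Prop :=
  match n with
  | 0 => voc T
  | S n => fun s => stage n s \/
      exists chi i a, (forall t, occurs chi t -> stage n t \/ is_placeholder t) /\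
        s = witness chi i a
  end.

Definition over n chi := forall s, occurs chi s -> stage n s \/ is_placeholder s.

Definition new_at n chi := over n chi /\ forall m, m < n -> ~ over m chi.

Lemma stage_mono m n : m <= n -> forall s, stage m s -> stage n s.
Proof. induction 1; intros s Hs; simpl; auto. Qed.

Lemma stage_shape n {s} : stage n s -> voc T s \/ exists chi i a, s = witness chi i a.
Proof.
  revert s. induction n as [|n IH]; intros s Hs; simpl in Hs; auto.
  destruct Hs as [Hs|(chi & i & a & _ & ->)]; eauto.
Qed.

Lemma stage_coded n {s} : stage n s -> coded s.
Proof.
  intros Hs. destruct (stage_shape n Hs) as [V|(chi & i & a & ->)];
    [left; exact V|right; do 2 eexists; reflexivity].
Qed.

Lemma stage_not_placeholder n {s} : stage n s -> ~ is_placeholder s.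
Proof.
  intros Hs (i & a & ->). destruct (stage_shape n Hs) as [V|(chi & j & b & E)].
  - exact (fr_fresh V).
  - apply (@witness_not_placeholder chi j b). rewrite <- E. exists i, a. reflexivity.
Qed.

Lemma over_coded {n chi} : over n chi -> forall s, occurs chi s -> coded s.
Proof.
  intros O s Os.
  destruct (O s Os) as [H|(i & a & ->)]; [exact (stage_coded n H)|right; do 2 eexists; reflexivity].
Qed.

Lemma witness_stage m chi i a : (forall s, occurs chi s -> coded s) ->
  stage m (witness chi i a) -> exists k, k < m /\ over k chi.
Proof.
  intros C. induction m as [|m IH]; simpl; intros Hs.
  - contradiction (fr_fresh Hs).
  - destruct Hs as [Hs|(chi' & i' & a' & O & E)].
    + destruct (IH Hs) as [k [Hk Ok]]. exists k. split; [lia|exact Ok].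
    + apply witness_inj in E as [<- _]; [exists m; split; [lia|exact O]|exact C|].
      exact (over_coded O).
Qed.

Lemma witness_fresh {n chi i a} : new_at n chi -> ~ stage n (witness chi i a).
Proof.
  intros [O N] Hs. destruct (witness_stage n chi i a (over_coded O) Hs) as [k [Hk Ok]].
  exact (N k Hk Ok).
Qed.

Lemma witness_next_stage n chi i a : over n chi -> stage (S n) (witness chi i a).
Proof. intros O. simpl. right. exists chi, i, a. auto. Qed.

Definition instantiate chi s :=
  if excluded_middle_informative (is_placeholder s)
  then witness chi (fst (ph_index s)) (snd (ph_index s)) else s.

Definition inst chi := rename (instantiate chi) chi.

Lemma instantiate_placeholder chi i a : instantiate chi (placeholder i a) = witness chi i a.
Proof.
  unfold instantiate.
  destruct excluded_middle_informative as [_|N]; [|exfalso; apply N; exists i, a; reflexivity].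
  rewrite ph_index_placeholder. reflexivity.
Qed.

Lemma instantiate_other chi s : ~ is_placeholder s -> instantiate chi s = s.
Proof. intros N. unfold instantiate. destruct excluded_middle_informative; tauto. Qed.

Lemma occurs_inst {n chi u} : over n chi -> occurs (inst chi) u ->
  stage n u \/ exists i a, u = witness chi i a.
Proof.
  intros O Ou. apply occurs_rename in Ou as [s Os <-].
  destruct (O s Os) as [H|(i & a & ->)].
  - left. rewrite instantiate_other; [exact H|exact (stage_not_placeholder n H)].
  - right. rewrite instantiate_placeholder. eauto.
Qed.

Lemma sentence_inst n chi :
  over n chi -> closed_wf ar chi -> sentence_of ar (stage (S n)) (inst chi).
Proof.
  intros O [W [Cl _]]. apply sentence_rename; [|exact W|exact Cl].
  intros s Os. destruct (O s Os) as [H|(i & a & ->)].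
  - rewrite instantiate_other by exact (stage_not_placeholder n H).
    split; [reflexivity|left; exact H].
  - rewrite instantiate_placeholder.
    split; [unfold witness, placeholder; rewrite !fr_ar; reflexivity|].
    apply witness_next_stage, O.
Qed.

Definition complete_at n (Sg : form Sym -> Prop) :=
  (forall phi, Sg phi -> sentence_of ar (stage n) phi) /\ consistent Sg /\
  (forall phi, sentence_of ar (stage n) phi -> Sg phi \/ Sg (FNeg phi)).

Definition instances (As : form Sym -> Prop) phi := exists2 chi, As chi & phi = inst chi.

(* One round: witness a maximal consistent family [As] of sentences that first live at
   stage [n], then complete over stage [n+1]. *)
Definition next_round n (Sg Sg' : form Sym -> Prop) := exists As,
  (forall chi, As chi -> new_at n chi /\ closed_wf ar chi) /\
  (forall phi, Sg phi \/ instances As phi -> Sg' phi) /\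
  (forall chi, new_at n chi -> closed_wf ar chi -> ~ As chi ->
     ~ consistent (fun phi => (Sg phi \/ instances As phi) \/ phi = inst chi)) /\
  complete_at (S n) Sg'.

Lemma next_round_exists n Sg : complete_at n Sg -> exists Sg', next_round n Sg Sg'.
Proof.
  intros [Sn [C _]].
  set (with_instances := fun As phi => Sg phi \/ instances As phi).
  set (P := fun As => (forall chi, As chi -> new_at n chi /\ closed_wf ar chi) /\
                      consistent (with_instances As)).
  destruct (@zorn_subsets_above _ P (fun _ => False)) as [As [[HAs CAs] _] Amax].
  - split; [intros _ []|]. eapply consistent_sub; [exact C|]. intros phi [H|[chi []]]; auto.
  - intros F FP Fch [X0 FX0]. split.
    + intros chi [X FX Xc]. exact (proj1 (FP X FX) chi Xc).
    + set (G := fun Y => exists2 X, F X & Y = with_instances X).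
      eapply consistent_sub; [apply (consistent_chain_union (F := G))|].
      * intros Y [X FX ->]. exact (proj2 (FP X FX)).
      * intros Y1 Y2 [X1 F1 ->] [X2 F2 ->].
        destruct (Fch X1 X2 F1 F2) as [H|H]; [left|right];
          intros phi [Hp|[chi Hc ->]];
          solve [left; exact Hp|right; exists chi; auto].
      * exists (with_instances X0), X0; auto.
      * intros phi [Hp|[chi [X FX Xc] ->]].
        -- exists (with_instances X0); [exists X0; auto|left; exact Hp].
        -- exists (with_instances X); [exists X; auto|right; exists chi; auto].
  - destruct (@lindenbaum _ ar (stage (S n)) (with_instances As)) as (Sg' & H1 & H2 & H3 & H4).
    + intros phi [H|[chi Ac ->]].
      * exact (sentence_mono _ (fun s Hs => or_introl Hs) (Sn phi H)).
      * destruct (HAs chi Ac) as [[O _] cw]. exact (sentence_inst O cw).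
    + exact CAs.
    + exists Sg', As. split; [exact HAs|split; [exact H1|split]].
      * intros chi Nc cw NA Cc. apply NA.
        apply (Amax (fun c => As c \/ c = chi)); [| |right; reflexivity].
        -- split; [intros c [Hc| ->]; auto|].
           eapply consistent_sub; [exact Cc|].
           intros phi [H|[c [Hc| ->] ->]];
             [left; left; exact H|left; right; exists c; auto|right; reflexivity].
        -- intros c Hc. left. exact Hc.
      * split; [exact H3|split; [exact H2|exact H4]].
Qed.

Hypothesis T_in : T_lt ar K T.

Definition initial_round := epsilon (inhabits (sens T))
  (fun Sg => (forall phi, sens T phi -> Sg phi) /\ complete_at 0 Sg).

Fixpoint rounds n : form Sym -> Prop :=
  match n with
  | 0 => initial_round
  | S n => epsilon (inhabits (sens T)) (next_round n (rounds n))
  end.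

Lemma initial_round_spec :
  (forall phi, sens T phi -> initial_round phi) /\ complete_at 0 initial_round.
Proof.
  unfold initial_round. apply epsilon_spec. destruct T_in as [Th [C _]].
  destruct (lindenbaum Th C) as (Sg & H1 & H2 & H3 & H4). exists Sg.
  split; [exact H1|split; [exact H3|split; [exact H2|exact H4]]].
Qed.

Lemma rounds_spec n : complete_at n (rounds n) /\ next_round n (rounds n) (rounds (S n)).
Proof.
  assert (succ : forall n, complete_at n (rounds n) -> next_round n (rounds n) (rounds (S n))).
  { intros m Cm. exact (epsilon_spec _ _ (next_round_exists Cm)). }
  induction n as [|n [IH _]].
  - split; [exact (proj2 initial_round_spec)|]. apply succ, initial_round_spec.
  - destruct (succ n IH) as (As & _ & _ & _ & Cn). split; [exact Cn|]. apply succ, Cn.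
Qed.

Lemma rounds_mono m n : m <= n -> forall phi, rounds m phi -> rounds n phi.
Proof.
  induction 1 as [|n _ IH]; intros phi Hp; [exact Hp|].
  destruct (proj2 (rounds_spec n)) as (As & _ & Hincl & _). apply Hincl. left. apply IH, Hp.
Qed.

Lemma stage_bounded (Q : Sym -> Prop) (l : list Sym) :
  (forall s, In s l -> (exists n, stage n s) \/ Q s) ->
  exists N, forall s, In s l -> stage N s \/ Q s.
Proof.
  induction l as [|a l IH]; intros Hl.
  - exists 0. intros _ [].
  - destruct IH as [N HN]; [intros; apply Hl; simpl; auto|].
    destruct (Hl a (or_introl eq_refl)) as [[n Hn]|Qa].
    + exists (max N n). intros s [<-|Hs].
      * left. apply (stage_mono (m := n)); [lia|exact Hn].
      * destruct (HN s Hs) as [H|H]; [left|right; exact H].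
        apply (stage_mono (m := N)); [lia|exact H].
    + exists N. intros s [<-|Hs]; auto.
Qed.

Lemma rounds_bounded {l : list (form Sym)} :
  (forall phi, In phi l -> exists n, rounds n phi) ->
  exists N, forall phi, In phi l -> rounds N phi.
Proof.
  induction l as [|a l IH]; intros Hl.
  - exists 0. intros _ [].
  - destruct IH as [N HN]; [intros; apply Hl; simpl; auto|].
    destruct (Hl a (or_introl eq_refl)) as [n Hn].
    exists (max N n).
    intros phi [<-|Hp]; [apply (rounds_mono (m := n))|apply (rounds_mono (m := N))]; auto; lia.
Qed.

Definition ec_extension :=
  Theory (fun s => exists n, stage n s) (fun phi => exists n, rounds n phi).

Lemma ec_extension_complete : complete ar ec_extension.
Proof.
  intros phi [W [Cl O]]. simpl in O.
  destruct (stage_bounded (fun _ => False) (syms phi)) as [N HN].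
  { intros s Hs. left. apply O, syms_occurs, Hs. }
  assert (SN : sentence_of ar (stage N) phi).
  { split; [exact W|split; [exact Cl|]].
    intros s Os. destruct (HN s (proj2 (syms_occurs phi s) Os)); tauto. }
  destruct (proj2 (proj2 (proj1 (rounds_spec N))) phi SN) as [H|H]; [left|right]; exists N; exact H.
Qed.

Variables (eAK : A -> K).
Hypothesis eAK_inj : injective eAK.
Hypothesis no_K_in_A : ~ exists g : K -> A, injective g.

Lemma ec_extension_lt : T_lt ar K ec_extension.
Proof.
  destruct T_in as [_ [_ Hcard]]. split; [|split].
  - intros phi [n Hn]. apply (sentence_mono _ (fun s Hs => ex_intro _ n Hs)).
    exact (proj1 (proj1 (rounds_spec n)) phi Hn).
  - intros l Hl. destruct (rounds_bounded Hl) as [N HN].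
    exact (proj1 (proj2 (proj1 (rounds_spec N))) l HN).
  - split.
    + exists (fun s => eAK (symcode (proj1_sig s))). intros [x [m Hx]] [y [n Hy]] E. simpl in E.
      apply eAK_inj, symcode_inj in E; [|exact (stage_coded m Hx)|exact (stage_coded n Hy)].
      subst y. f_equal. apply proof_irrelevance.
    + intros [g g_inj]. apply no_K_in_A. exists (fun k => symcode (proj1_sig (g k))).
      intros a b E. apply g_inj. destruct (g a) as [x [m Hx]], (g b) as [y [n Hy]]. simpl in E.
      apply symcode_inj in E; [|exact (stage_coded m Hx)|exact (stage_coded n Hy)].
      subst y. f_equal. apply proof_irrelevance.
Qed.

Definition to_placeholders (U : list Sym) s :=
  if excluded_middle_informative (In s U) then placeholder (idx s U) (ar s) else s.

Definition to_witnesses chi (U : list Sym) s :=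
  if excluded_middle_informative (In s U) then witness chi (idx s U) (ar s) else s.

Lemma to_placeholders_in U s : In s U -> to_placeholders U s = placeholder (idx s U) (ar s).
Proof. intros Hs. unfold to_placeholders. destruct excluded_middle_informative; tauto. Qed.

Lemma to_placeholders_out U s : ~ In s U -> to_placeholders U s = s.
Proof. intros Hs. unfold to_placeholders. destruct excluded_middle_informative; tauto. Qed.

Lemma to_witnesses_in chi U s : In s U -> to_witnesses chi U s = witness chi (idx s U) (ar s).
Proof. intros Hs. unfold to_witnesses. destruct excluded_middle_informative; tauto. Qed.

Lemma to_witnesses_out chi U s : ~ In s U -> to_witnesses chi U s = s.
Proof. intros Hs. unfold to_witnesses. destruct excluded_middle_informative; tauto. Qed.

Lemma to_witnesses_inj n chi U : over n chi -> inj_on (fun s => In s U) (to_witnesses chi U).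
Proof.
  intros O s t Hs Ht E. rewrite !to_witnesses_in in E by assumption.
  apply witness_inj in E as (_ & E & _); [|exact (over_coded O)|exact (over_coded O)].
  rewrite <- (nth_idx s U s Hs), <- (nth_idx t U s Ht), E. reflexivity.
Qed.

Lemma placeholder_form_new U psi :
  (forall s, occurs psi s -> (exists m, stage m s) \/ In s U) ->
  exists n, new_at n (rename (to_placeholders U) psi) /\
    forall s, occurs psi s -> ~ In s U -> stage n s.
Proof.
  intros O. set (chi := rename (to_placeholders U) psi).
  destruct (stage_bounded (fun s => In s U) (syms psi)) as [N HN].
  { intros s Hs. apply O, syms_occurs, Hs. }
  destruct (@exists_least (fun n => over n chi)) as [n [On Nmin]].
  { exists N. intros t Ot. apply occurs_rename in Ot as [s Os <-].
    destruct (classic (In s U)) as [Hs|Hs].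
    - right. rewrite to_placeholders_in by exact Hs. do 2 eexists. reflexivity.
    - rewrite to_placeholders_out by exact Hs.
      destruct (HN s (proj2 (syms_occurs psi s) Os)); tauto. }
  exists n. split; [split; assumption|].
  intros s Os Hs.
  destruct (On s) as [H|H];
    [apply occurs_rename; exists s; [exact Os|apply to_placeholders_out, Hs]| |].
  - exact H.
  - destruct (O s Os) as [[m Hm]|]; [contradiction (stage_not_placeholder m Hm H)|contradiction].
Qed.

Lemma inst_placeholder_form n U psi : (forall s, occurs psi s -> ~ In s U -> stage n s) ->
  let chi := rename (to_placeholders U) psi in inst chi = rename (to_witnesses chi U) psi.
Proof.
  intros psi_stage chi. unfold inst, chi at 2. rewrite rename_comp. apply rename_ext. intros s Os.
  destruct (classic (In s U)) as [Hs|Hs].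
  - rewrite to_placeholders_in, to_witnesses_in by exact Hs. apply instantiate_placeholder.
  - rewrite to_placeholders_out, to_witnesses_out by exact Hs. apply instantiate_other.
    exact (stage_not_placeholder n (psi_stage s Os Hs)).
Qed.

(* Replacing the new symbols [U] of [psi] by placeholders gives [chi], first expressible
   at some stage [n]; maximality of round [n] forces [chi] to be witnessed, because
   [inst chi] is [psi] with [U] renamed to witnesses unused anywhere else. *)
Lemma ec_extension_ec : ec_property ar ec_extension.
Proof.
  intros U psi _ HU [W [Cl O]] Cons. simpl in HU, O.
  set (chi := rename (to_placeholders U) psi).
  destruct (placeholder_form_new U psi O) as [n [Nchi psi_stage]].
  assert (cw : closed_wf ar chi).
  { apply sentence_rename; [|exact W|exact Cl]. intros s Os. split; [|constructor].
    destruct (classic (In s U)) as [Hs|Hs].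
    - rewrite to_placeholders_in by exact Hs. apply fr_ar.
    - rewrite to_placeholders_out by exact Hs. reflexivity. }
  set (g := to_witnesses chi U).
  assert (g_inj : inj_on (fun s => In s U) g) by exact (to_witnesses_inj U (proj1 Nchi)).
  assert (Eg : inst chi = rename g psi) by exact (inst_placeholder_form n U psi psi_stage).
  destruct (proj2 (rounds_spec n)) as (As & HAs & Hincl & Hmax & _).
  assert (Achi : As chi).
  { apply NNPP. intros NA. apply (Hmax chi Nchi cw NA). rewrite Eg.
    apply (consistent_rename_new _ U g_inj); [exact (fun s _ => to_witnesses_out chi U s)| |].
    - intros u Hu s Hs E. unfold g in E. rewrite to_witnesses_in in E by exact Hs. subst u.
      destruct Hu as [[phi [Hp|[c Ac ->]] Ou]|[Ou Hu]].
      + exact (witness_fresh Nchi (proj2 (proj2 (proj1 (proj1 (rounds_spec n)) phi Hp)) _ Ou)).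
      + destruct (HAs c Ac) as [[Oc _] _].
        destruct (occurs_inst Oc Ou) as [Hw|(i & a & E)]; [exact (witness_fresh Nchi Hw)|].
        apply witness_inj in E as [-> _]; [exact (NA Ac)|exact (over_coded (proj1 Nchi))|].
        exact (over_coded Oc).
      + exact (witness_fresh Nchi (psi_stage _ Ou Hu)).
    - eapply consistent_sub; [exact Cons|].
      intros phi [[H|[c Ac ->]]| ->]; [left; exists n; exact H| |right; reflexivity].
      left. exists (S n). apply Hincl. right. exists c; auto. }
  exists g. split; [|split; [exact g_inj|split; [exact (to_witnesses_out chi U)|]]].
  - intros s Hs. unfold g. rewrite to_witnesses_in by exact Hs. split.
    + exists (S n). apply witness_next_stage, (proj1 Nchi).
    + unfold witness. apply fr_ar.
  - exists (S n). rewrite <- Eg. apply Hincl. right. exists chi; auto.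
Qed.

Lemma ec_extension_spec : T_ec ar K ec_extension /\ (forall s, voc T s -> voc ec_extension s) /\
  (forall phi, sens T phi -> sens ec_extension phi).
Proof.
  split; [apply T_ec_iff; split; [split|]|split].
  - exact ec_extension_lt.
  - exact ec_extension_complete.
  - exact ec_extension_ec.
  - intros s Hs. exists 0. exact Hs.
  - intros phi Hp. exists 0. exact (proj1 initial_round_spec phi Hp).
Qed.

End Construction.

Section EcExtension.
Variables (Sym : Type) (ar : Sym -> nat) (K : Type).
Variable h : nat -> K.
Hypothesis h_inj : injective h.
Hypothesis Hbig : forall n, exists h : K -> {s : Sym | ar s = n}, injective h.
Hypothesis K_uncountable : ~ exists g : K -> nat, injective g.

(* Codes live in [A := voc T + ℕ], which has size below κ because κ > ℵ0; fresh
   symbols are indexed by [ℕ × A] through [A ↪ K]. *)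
Theorem ec_extension_exists (T : theory Sym) : T_lt ar K T ->
  exists T' : theory Sym, T_ec ar K T' /\ (forall s, voc T s -> voc T' s) /\
    (forall phi, sens T phi -> sens T' phi).
Proof.
  intros HT. pose proof HT as [_ [_ Hcard]]. pose proof Hcard as [[fL fL_inj] NL].
  set (A := ({s : Sym | voc T s} + nat)%type).
  set (nA := fun n : nat => (inr n : A)).
  assert (nA_inj : injective nA) by (intros m n E; injection E; auto).
  destruct (square_embeds nA_inj) as [pA pA_inj].
  destruct (square_embeds h_inj) as [pK pK_inj].
  set (tA := fun s => match excluded_middle_informative (voc T s) with
                      | left Hs => (inl (exist _ s Hs) : A) | right _ => nA 0 end).
  assert (tA_inj : inj_on (voc T) tA).
  { intros s t Hs Ht E. unfold tA in E.
    destruct (excluded_middle_informative (voc T s)); [|contradiction].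
    destruct (excluded_middle_informative (voc T t)); [|contradiction].
    injection E. auto. }
  destruct (sum_nat_embeds h_inj pK_inj fL_inj) as [eAK eAK_inj].
  assert (no_K_in_A : ~ exists g : K -> A, injective g).
  { apply no_embedding_sum_nat; [exact NL|exact K_uncountable]. }
  apply (card_ltP h) in Hcard as [_ NE].
  destruct (fresh_indexed_family ar h Hbig pK_inj NE eAK_inj) as (fr & fr_ar & fr_fresh & fr_inj).
  exists (ec_extension ar T pA nA tA fr).
  exact (ec_extension_spec fr pA_inj nA_inj tA_inj fr_ar fr_fresh fr_inj HT eAK_inj no_K_in_A).
Qed.

End EcExtension.

Theorem lemma2p3 (Sym : Type) (ar : Sym -> nat) (K : Type)
  (Kinf : exists h : nat -> K, injective h)
  (Hbig : forall n, exists h : K -> {s : Sym | ar s = n}, injective h) :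
  (forall T : theory Sym,
      (T_c ar K T -> T_lt ar K T) /\ (T_ab ar K T -> T_c ar K T) /\
      (T_ec ar K T -> T_ab ar K T)) /\
  (forall T : theory Sym, T_lt ar K T ->
     exists T' : theory Sym, T_c ar K T' /\
       (forall s, voc T' s <-> voc T s) /\
       (forall phi, sens T phi -> sens T' phi)) /\
  (forall (I : Type) (Ti : I -> theory Sym) (T : theory Sym),
     (forall i j, i <> j -> forall s, voc (Ti i) s /\ voc (Ti j) s <-> voc T s) ->
     (forall i, T_lt ar K (Ti i)) ->
     T_ab ar K T ->
     (forall i phi, sens T phi -> sens (Ti i) phi) ->
     consistent (fun phi => exists i, sens (Ti i) phi)) /\
  (~ (exists h : K -> nat, injective h) ->
   forall T : theory Sym, T_lt ar K T ->
     exists T' : theory Sym, T_ec ar K T' /\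
       (forall s, voc T s -> voc T' s) /\
       (forall phi, sens T phi -> sens T' phi)) /\
  (forall (l : cls) (f : Sym -> Sym) (tau2 : Sym -> Prop) (T : theory Sym),
     (forall s t, voc T s -> voc T t -> f s = f t -> s = t) ->
     (forall s, voc T s -> ar (f s) = ar s) ->
     (forall t, tau2 t <-> exists s, voc T s /\ f s = t) ->
     T_cls ar K l T ->
     T_cls ar K l (rename_theory f tau2 T)).
Proof.
  pose proof Kinf as [h h_inj].
  split; [|split; [|split; [|split]]].
  - intros T. split; [apply proj1|split; [apply proj1|apply T_ab_of_T_ec]].
  - apply complete_extension.
  - intros I Ti T Hv Hlt Hab HTi. eapply union_consistent_over_ab; eassumption.
  - intros K_uncountable. exact (ec_extension_exists h_inj Hbig K_uncountable).
  - intros [] f tau2 T f_inj f_ar tau2_image HT; simpl in *.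
    + exact (T_c_rename h_inj f tau2 f_inj f_ar tau2_image (proj1 (proj1 HT)) HT).
    + exact (T_ab_rename h_inj Hbig f tau2 f_inj f_ar tau2_image (proj1 (proj1 (proj1 HT))) HT).
    + exact (T_ec_rename h_inj Hbig f tau2 f_inj f_ar tau2_image (proj1 (proj1 (proj1 HT))) HT).
Qed.
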